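(* The group $H$ does not contain any non-abelian free subgroup. Consequently, for every subring $A<\mathbb{R}$, the group $H(A)$ contains no non-abelian free subgroup.
   Context: Let $\mathbb{P}^1=\mathbb{P}^1(\mathbb{R})$ be the real projective line with its usual topology (a circle), with the natural action of $\mathrm{PSL}_2(\mathbb{R})$. Let $G$ be the group of all homeomorphisms of $\mathbb{P}^1$ which are piecewise in $\mathrm{PSL}_2(\mathbb{R})$ with finitely many pieces, each piece an interval of $\mathbb{P}^1$. Let $\infty\in\mathbb{P}^1$ be the point corresponding to the first basis vector of $\mathbb{R}^2$, and $H<G$ its stabilizer. For a subring $A<\mathbb{R}$, $P_A\subseteq\mathbb{P}^1$ is the set of fixed points of hyperbolic elements of $\mathrm{PSL}_2(A)$, $G(A)$ is the subgroup of $G$ of elements piecewise in $\mathrm{PSL}_2(A)$ with all interval endpoints in $P_A$, and $H(A)=G(A)\cap H$. *)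

From Stdlib Require Import Reals List.
Open Scope R_scope.

(** The real projective line P^1(R), in the affine chart [x:y] |-> x/y:
    [Some x] is the line spanned by (x,1), and [None] = infinity is the line
    spanned by the first basis vector (1,0). *)
Definition P1 := option R.
Definition infty : P1 := None.

(** Topology of P^1 (one-point compactification of R, i.e. a circle),
    given by basic neighbourhoods. *)
Definition nbhd (p : P1) (U : P1 -> Prop) : Prop :=
  match p with
  | Some x => exists e, 0 < e /\ forall y, Rabs (y - x) < e -> U (Some y)
  | None => exists M, U None /\ forall y, M < Rabs y -> U (Some y)
  end.

Definition continuous_P1 (f : P1 -> P1) : Prop :=
  forall p V, nbhd (f p) V -> nbhd p (fun q => V (f q)).

Definition homeo_P1 (f : P1 -> P1) : Prop :=
  exists g : P1 -> P1,
    (forall p, g (f p) = p) /\ (forall p, f (g p) = p) /\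
    continuous_P1 f /\ continuous_P1 g.

(** Cyclic order on the circle P^1 (infinity placed after +oo / before -oo). *)
Definition ltP1 (a b : P1) : Prop :=
  match a, b with
  | Some x, Some y => x < y
  | Some _, None => True
  | None, _ => False
  end.

Definition cyc (a x b : P1) : Prop :=
  (ltP1 a x /\ ltP1 x b) \/ (ltP1 x b /\ ltP1 b a) \/ (ltP1 b a /\ ltP1 a x).

(** Open arc from a to b (in the positive direction); for a = b it is P^1 \ {a}. *)
Definition open_arc (a b x : P1) : Prop :=
  x <> a /\ x <> b /\ (a = b \/ cyc a x b).

(** A piece: an interval of P^1 with endpoints a, b (each endpoint included
    or not according to a boolean flag), together with a matrix (a,b,c,d). *)
Record piece := Piece {
  pa : P1; pb : P1; ca : bool; cb : bool; pm : R * R * R * R }.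

Definition in_arc (p : piece) (x : P1) : Prop :=
  open_arc (pa p) (pb p) x \/ (ca p = true /\ x = pa p) \/ (cb p = true /\ x = pb p).

Definition mob (m : R * R * R * R) (p : P1) : P1 :=
  let '(a, b, c, d) := m in
  match p with
  | Some x => if Req_EM_T (c * x + d) 0 then None else Some ((a * x + b) / (c * x + d))
  | None => if Req_EM_T c 0 then None else Some (a / c)
  end.

(** Matrices of SL_2(A) (their images in PSL_2(A) act through [mob]). *)
Definition in_SL2 (A : R -> Prop) (m : R * R * R * R) : Prop :=
  let '(a, b, c, d) := m in A a /\ A b /\ A c /\ A d /\ a * d - b * c = 1.

Definition hyperbolic (m : R * R * R * R) : Prop :=
  let '(a, b, c, d) := m in Rabs (a + d) > 2.

Definition P_ (A : R -> Prop) (x : P1) : Prop :=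
  exists m, in_SL2 A m /\ hyperbolic m /\ mob m x = x.

Definition piecewise (A : R -> Prop) (E : P1 -> Prop) (f : P1 -> P1) : Prop :=
  exists ps : list piece,
    (forall p, In p ps ->
        in_SL2 A (pm p) /\ E (pa p) /\ E (pb p) /\
        forall x, in_arc p x -> f x = mob (pm p) x) /\
    (forall x, exists p, In p ps /\ in_arc p x).

Definition allR : R -> Prop := fun _ => True.
Definition allP1 : P1 -> Prop := fun _ => True.

Definition in_G (f : P1 -> P1) : Prop := homeo_P1 f /\ piecewise allR allP1 f.
Definition in_H (f : P1 -> P1) : Prop := in_G f /\ f infty = infty.

Definition in_GA (A : R -> Prop) (f : P1 -> P1) : Prop :=
  homeo_P1 f /\ piecewise A (P_ A) f.
Definition in_HA (A : R -> Prop) (f : P1 -> P1) : Prop :=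
  in_GA A f /\ f infty = infty.

Definition subring (A : R -> Prop) : Prop :=
  A 0 /\ A 1 /\ (forall x y, A x -> A y -> A (x + y)) /\
  (forall x, A x -> A (- x)) /\ (forall x y, A x -> A y -> A (x * y)).

(** Free subgroups. A word is a list of letters (i, true) = x_i, (i, false) = x_i^-1. *)
Fixpoint reduced {I : Type} (w : list (I * bool)) : Prop :=
  match w with
  | l1 :: ((l2 :: _) as t) => ~ (fst l1 = fst l2 /\ snd l1 <> snd l2) /\ reduced t
  | _ => True
  end.

Fixpoint eval_word {I : Type} (x y : I -> P1 -> P1) (w : list (I * bool)) (p : P1) : P1 :=
  match w with
  | nil => p
  | (i, b) :: t => (if b then x i else y i) (eval_word x y t p)
  end.

(** The group [S] (a subgroup of the homeomorphism group, under composition)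
    contains a non-abelian free subgroup: some family (x_i) of elements of S,
    with at least two indices, is a free basis of the subgroup it generates
    (y_i is the inverse of x_i). *)
Definition has_nonabelian_free_subgroup (S : (P1 -> P1) -> Prop) : Prop :=
  exists (I : Type) (x y : I -> P1 -> P1),
    (forall i, S (x i)) /\
    (forall i p, y i (x i p) = p /\ x i (y i p) = p) /\
    (exists i j : I, i <> j) /\
    (forall w, w <> nil -> reduced w -> exists p, eval_word x y w p <> p).

From Stdlib Require Import Reals List Lra Lia Classical.
Import ListNotations.
Open Scope R_scope.

(* Every element of [H] fixes [infty] and restricts to an increasing
   homeomorphism of the real line that is piecewise Moebius.  Near [+-oo], and
   on either side of a fixed point [p] in the chart [t |-> p + 1/t], it acts as
   an affine map [t |-> lam t + mu]; its right germ at [p] is trivial unless [p]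
   is one of the finitely many fixed points of the matrices of its pieces.

   Suppose [x, y] in [H] freely generate a free group.  The affine group is
   metabelian, so [w = [[x,y],[x^-1,y^-1]]] is a nontrivial element which is
   the identity near every common fixed point of [x, y] and near [+-oo].  Let
   [d] be the top of the support of [w] and [a] the last common fixed point
   below [d].  Then [a] is one of the exceptional points above, and the group
   has no fixed point in [(a, d]], so some [q] pushes the support of [w] inside
   [(a, +oo)] to its own left; the commutator [[q w q^-1, w]] is again a
   nontrivial element with the same germ properties, now supported left of
   [a].  Each step lowers the number of exceptional points below the support;
   without a common fixed point below [d], the same construction yields a
   nontrivial word acting trivially, contradicting freeness.  Finally
   [H(A) <= H]. *)

(** * Reduced words *)

Fixpoint last_error {A : Type} (l : list A) : option A :=
  match l with nil => None | x :: nil => Some x | _ :: t => last_error t end.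

Lemma last_error_app {A : Type} (a b : list A) x :
  last_error b = Some x -> last_error (a ++ b) = Some x.
Proof.
  induction a as [|y a IH]; intro H; [exact H|]. simpl.
  specialize (IH H). destruct (a ++ b); [discriminate|exact IH].
Qed.

Lemma hd_error_app {A : Type} (a b : list A) x :
  hd_error a = Some x -> hd_error (a ++ b) = Some x.
Proof. destruct a; simpl; [discriminate|auto]. Qed.

Section Words.
Context {J : Type}.
Implicit Types (l : J * bool) (w : list (J * bool)).

Definition letter_inv l : J * bool := (fst l, negb (snd l)).
Definition word_inv w := rev (map letter_inv w).

Lemma letter_inv_involutive l : letter_inv (letter_inv l) = l.
Proof. destruct l as [k b]; unfold letter_inv; simpl; rewrite Bool.negb_involutive; reflexivity. Qed.

Lemma letter_inv_inj l1 l2 : letter_inv l1 = letter_inv l2 -> l1 = l2.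
Proof. intro H. rewrite <- (letter_inv_involutive l1), H. apply letter_inv_involutive. Qed.

Lemma word_inv_cons l w : word_inv (l :: w) = word_inv w ++ [letter_inv l].
Proof. reflexivity. Qed.

(* The left-hand side is the cancellation condition negated in [reduced]. *)
Lemma cancel_iff l1 l2 : (fst l1 = fst l2 /\ snd l1 <> snd l2) <-> l2 = letter_inv l1.
Proof.
  destruct l1 as [k x], l2 as [k' y]; unfold letter_inv; simpl. split.
  - intros [-> H]. destruct x, y; simpl; congruence.
  - intro H. inversion H; subst. destruct x; simpl; split; congruence.
Qed.

Definition reduced_word w s t : Prop :=
  reduced w /\ hd_error w = Some s /\ last_error w = Some t.

Lemma reduced_word_single l : reduced_word [l] l l.
Proof. repeat split. Qed.

Lemma reduced_word_nonnil w s t : reduced_word w s t -> w <> nil.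
Proof. intros [_ [H _]] E. subst. discriminate. Qed.

Lemma reduced_word_of_reduced w : reduced w -> w <> nil -> exists s t, reduced_word w s t.
Proof.
  intros R N. destruct (hd_error w) as [s|] eqn:Hs; [|destruct w; [congruence|discriminate]].
  destruct (last_error w) as [t|] eqn:Ht.
  - exists s, t. repeat split; assumption.
  - exfalso. clear Hs R. induction w as [|x [|y w] IH]; [congruence|discriminate|].
    apply IH; [discriminate|exact Ht].
Qed.

Lemma reduced_word_app a b s t s' t' :
  reduced_word a s t -> reduced_word b s' t' -> s' <> letter_inv t ->
  reduced_word (a ++ b) s t'.
Proof.
  intros [Ra [Ha La]] [Rb [Hb Lb]] N. split; [|split].
  - clear Ha. revert s Ra La. induction a as [|x a IH]; intros s Ra La; [discriminate|].
    destruct a as [|y a'].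
    + simpl in La |- *. inversion La; subst. destruct b as [|z b']; [discriminate|].
      simpl in Hb. inversion Hb; subst. split; [rewrite cancel_iff; exact N|exact Rb].
    + destruct Ra as [R1 R2]. split; [exact R1|]. apply (IH y R2 La).
  - apply hd_error_app, Ha.
  - apply last_error_app, Lb.
Qed.

Lemma reduced_word_inv w s t :
  reduced_word w s t -> reduced_word (word_inv w) (letter_inv t) (letter_inv s).
Proof.
  revert s t. induction w as [|x w IH]; intros s t H.
  - destruct H as [_ [H _]]; discriminate.
  - destruct w as [|y w].
    + destruct H as [_ [H1 H2]]. simpl in H1, H2. inversion H1; inversion H2; subst.
      apply reduced_word_single.
    + destruct H as [[R1 R2] [H1 H2]]. simpl in H1. inversion H1; subst.
      rewrite word_inv_cons.
      apply reduced_word_app with (letter_inv y) (letter_inv s).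
      * apply IH. repeat split; assumption.
      * apply reduced_word_single.
      * rewrite cancel_iff in R1. intro E. apply R1, letter_inv_inj.
        rewrite E, letter_inv_involutive. reflexivity.
Qed.

Definition commutator_word (a b : list (J * bool)) := a ++ b ++ word_inv a ++ word_inv b.

Lemma reduced_word_commutator a b sa ta sb tb :
  reduced_word a sa ta -> reduced_word b sb tb ->
  sb <> letter_inv ta -> ta <> tb -> tb <> letter_inv sa ->
  reduced_word (commutator_word a b) sa (letter_inv sb).
Proof.
  intros Ra Rb N1 N2 N3. unfold commutator_word.
  apply (reduced_word_app a _ sa ta sb); [exact Ra| |exact N1].
  apply (reduced_word_app b _ sb tb (letter_inv ta)); [exact Rb| |].
  - apply (reduced_word_app _ _ _ (letter_inv sa) (letter_inv tb));
      [apply reduced_word_inv; exact Ra|apply reduced_word_inv; exact Rb|].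
    intro E. apply N3. rewrite letter_inv_involutive in E. rewrite <- E. symmetry. apply letter_inv_involutive.
  - intro E. apply N2, letter_inv_inj, E.
Qed.

End Words.

(** * Affine germs *)

(* [affine_germ phi kap s lam mu]: read in the chart [kap], [phi] acts as
   [t |-> lam * t + mu] near the end [s * oo] ([s = 1] or [s = -1]).  With
   [kap t = t] this is a germ at [+-oo]; with [kap t = p + / t] it is a germ at
   the right ([s = 1]) or left ([s = -1]) of [p]. *)
Definition affine_germ (phi kap : R -> R) (s lam mu : R) : Prop :=
  exists T, forall t, T < s * t -> phi (kap t) = kap (lam * t + mu).

Lemma affine_germ_ext phi psi kap s lam mu lam' mu' :
  (forall x, phi x = psi x) -> lam = lam' -> mu = mu' ->
  affine_germ phi kap s lam mu -> affine_germ psi kap s lam' mu'.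
Proof. intros E <- <- [T H]. exists T. intros t Ht. rewrite <- E. auto. Qed.

Lemma affine_germ_comp phi psi kap s l1 m1 l2 m2 : (s = 1 \/ s = -1) -> 0 < l2 ->
  affine_germ phi kap s l1 m1 -> affine_germ psi kap s l2 m2 ->
  affine_germ (fun x => phi (psi x)) kap s (l1 * l2) (l1 * m2 + m1).
Proof.
  intros Hs Hl [T1 H1] [T2 H2].
  exists (Rmax T2 ((T1 + Rabs m2) / l2)). intros t Ht.
  pose proof (Rmax_l T2 ((T1 + Rabs m2) / l2)). pose proof (Rmax_r T2 ((T1 + Rabs m2) / l2)).
  rewrite H2 by lra. rewrite H1; [f_equal; ring|].
  assert (B : T1 + Rabs m2 < l2 * (s * t)).
  { replace (T1 + Rabs m2) with (l2 * ((T1 + Rabs m2) / l2)) by (field; lra).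
    apply Rmult_lt_compat_l; lra. }
  pose proof (Rle_abs m2). pose proof (Rle_abs (- m2)). rewrite Rabs_Ropp in *.
  destruct Hs as [-> | ->]; nra.
Qed.

Lemma affine_germ_inv phi phi' kap s l m : (s = 1 \/ s = -1) -> 0 < l ->
  (forall x, phi' (phi x) = x) ->
  affine_germ phi kap s l m -> affine_germ phi' kap s (/ l) (- m / l).
Proof.
  intros Hs Hl Hinv [T H].
  exists (l * Rabs T + Rabs m). intros t Ht.
  set (u := / l * t + - m / l).
  assert (Hu : T < s * u).
  { pose proof (Rle_abs m). pose proof (Rle_abs (- m)). rewrite Rabs_Ropp in *.
    assert (l * T <= l * Rabs T) by (apply Rmult_le_compat_l; [lra|apply Rle_abs]).
    assert (l * T < l * (s * u)).
    { unfold u. replace (l * (s * (/ l * t + - m / l))) with (s * t - s * m) by (field; lra).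
      destruct Hs as [-> | ->]; lra. }
    nra. }
  specialize (H u Hu).
  replace (l * u + m) with t in H by (unfold u; field; lra).
  rewrite <- H, Hinv. reflexivity.
Qed.

(* The affine group is metabelian: a commutator of affine germs is a translation. *)
Lemma affine_germ_commutator phi phi' psi psi' kap s l1 m1 l2 m2 :
  (s = 1 \/ s = -1) -> 0 < l1 -> 0 < l2 ->
  (forall x, phi' (phi x) = x) -> (forall x, psi' (psi x) = x) ->
  affine_germ phi kap s l1 m1 -> affine_germ psi kap s l2 m2 ->
  affine_germ (fun x => phi (psi (phi' (psi' x)))) kap s 1 (m1 * (1 - l2) - m2 * (1 - l1)).
Proof.
  intros Hs P1 P2 I1 I2 G1 G2.
  assert (Q1 : 0 < / l1) by (apply Rinv_0_lt_compat; auto).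
  assert (Q2 : 0 < / l2) by (apply Rinv_0_lt_compat; auto).
  pose proof (affine_germ_inv _ _ _ _ _ _ Hs P1 I1 G1) as G1'.
  pose proof (affine_germ_inv _ _ _ _ _ _ Hs P2 I2 G2) as G2'.
  pose proof (affine_germ_comp _ _ _ _ _ _ _ _ Hs Q2 G1' G2') as G3.
  pose proof (affine_germ_comp _ _ _ _ _ _ _ _ Hs (Rmult_lt_0_compat _ _ Q1 Q2) G2 G3) as G4.
  assert (Q3 : 0 < l2 * (/ l1 * / l2)) by (repeat apply Rmult_lt_0_compat; auto).
  pose proof (affine_germ_comp _ _ _ _ _ _ _ _ Hs Q3 G1 G4) as G5.
  eapply affine_germ_ext; [| | |exact G5]; [reflexivity|field; lra|field; lra].
Qed.

Lemma affine_germ_id_near_point phi p : phi p = p ->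
  affine_germ phi (fun t => p + / t) 1 1 0 -> affine_germ phi (fun t => p + / t) (-1) 1 0 ->
  exists e, 0 < e /\ forall x, Rabs (x - p) < e -> phi x = x.
Proof.
  intros H0 [T1 H1] [T2 H2].
  set (T := Rmax (Rmax T1 T2) 0 + 1).
  pose proof (Rmax_l (Rmax T1 T2) 0). pose proof (Rmax_r (Rmax T1 T2) 0).
  pose proof (Rmax_l T1 T2). pose proof (Rmax_r T1 T2).
  exists (/ T). split; [apply Rinv_0_lt_compat; unfold T; lra|].
  intros x Hx. apply Rabs_def2 in Hx.
  destruct (Rtotal_order x p) as [Hlt|[Heq|Hgt]]; [| subst; exact H0 |].
  - assert (Ht : T < - / (x - p)).
    { replace (- / (x - p)) with (/ (p - x)) by (field; lra).
      replace T with (/ / T) by (field; unfold T; lra).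
      apply Rinv_lt_contravar; [|lra].
      apply Rmult_lt_0_compat; [lra|apply Rinv_0_lt_compat; unfold T; lra]. }
    specialize (H2 (/ (x - p)) ltac:(unfold T in *; lra)).
    replace (p + / / (x - p)) with x in H2 by (field; lra).
    rewrite H2. field; lra.
  - assert (Ht : T < / (x - p)).
    { replace T with (/ / T) by (field; unfold T; lra).
      apply Rinv_lt_contravar; [|lra].
      apply Rmult_lt_0_compat; [lra|apply Rinv_0_lt_compat; unfold T; lra]. }
    specialize (H1 (/ (x - p)) ltac:(unfold T in *; lra)).
    replace (p + / / (x - p)) with x in H1 by (field; lra).
    rewrite H1. field; lra.
Qed.

Lemma affine_germ_id_near_infinity phi :
  affine_germ phi (fun t => t) 1 1 0 -> affine_germ phi (fun t => t) (-1) 1 0 ->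
  exists M, forall x, M < Rabs x -> phi x = x.
Proof.
  intros [T1 H1] [T2 H2]. exists (Rmax T1 T2). intros x Hx.
  pose proof (Rmax_l T1 T2). pose proof (Rmax_r T1 T2).
  destruct (Rle_or_lt 0 x).
  - rewrite Rabs_pos_eq in Hx by lra. rewrite H1 by lra. ring.
  - rewrite Rabs_left in Hx by lra. rewrite H2 by lra. ring.
Qed.

(** * Increasing bijections of the line *)

Lemma strict_increasing_le f : strict_increasing f -> forall a b, a <= b -> f a <= f b.
Proof. intros H a b [Hab|<-]; [left; apply H; exact Hab|right; reflexivity]. Qed.

Lemma strict_increasing_inverse f g :
  (forall t, f (g t) = t) -> strict_increasing f -> strict_increasing g.
Proof.
  intros FG Hf a b Hab. destruct (Rlt_or_le (g a) (g b)) as [|[H|H]]; auto; exfalso.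
  - apply Hf in H. rewrite !FG in H. lra.
  - apply (f_equal f) in H. rewrite !FG in H. lra.
Qed.

Definition is_glb (S : R -> Prop) (m : R) : Prop :=
  (forall z, S z -> m <= z) /\ (forall b, (forall z, S z -> b <= z) -> b <= m).

Lemma glb_exists (S : R -> Prop) b z0 : (forall z, S z -> b <= z) -> S z0 -> exists m, is_glb S m.
Proof.
  intros Hb Hz0.
  destruct (completeness (fun z => S (- z))) as [m [Hm1 Hm2]].
  - exists (- b). intros z Hz. specialize (Hb _ Hz). lra.
  - exists (- z0). rewrite Ropp_involutive. exact Hz0.
  - exists (- m). split.
    + intros z Hz. assert (- z <= m) by (apply Hm1; rewrite Ropp_involutive; exact Hz). lra.
    + intros b' Hb'. assert (m <= - b') by (apply Hm2; intros z Hz; specialize (Hb' _ Hz); lra). lra.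
Qed.

Lemma lub_exists (S : R -> Prop) b z0 : (forall z, S z -> z <= b) -> S z0 -> exists m, is_lub S m.
Proof. intros Hb Hz0. apply upper_bound_thm; [exists b; exact Hb|exists z0; exact Hz0]. Qed.

Section InvariantBounds.
Variables (f g : R -> R) (S : R -> Prop).
Hypotheses (fg : forall t, f (g t) = t) (gf : forall t, g (f t) = t).
Hypothesis f_incr : strict_increasing f.
Hypotheses (S_f : forall z, S z -> S (f z)) (S_g : forall z, S z -> S (g z)).

Let g_incr : strict_increasing g := strict_increasing_inverse f g fg f_incr.

Lemma lub_invariant_fixed m : is_lub S m -> f m = m.
Proof.
  intros [Hub Hleast].
  assert (m <= f m).
  { apply Hleast. intros z Hz. rewrite <- (fg z). apply strict_increasing_le; auto. }
  assert (m <= g m).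
  { apply Hleast. intros z Hz. rewrite <- (gf z). apply strict_increasing_le; auto. }
  assert (f m <= m) by (rewrite <- (fg m) at 2; apply strict_increasing_le; auto).
  lra.
Qed.

Lemma glb_invariant_fixed m : is_glb S m -> f m = m.
Proof.
  intros [Hlb Hgreat].
  assert (f m <= m).
  { apply Hgreat. intros z Hz. rewrite <- (fg z). apply strict_increasing_le; auto. }
  assert (g m <= m).
  { apply Hgreat. intros z Hz. rewrite <- (gf z). apply strict_increasing_le; auto. }
  assert (m <= f m) by (rewrite <- (fg m) at 1; apply strict_increasing_le; auto).
  lra.
Qed.

End InvariantBounds.

Lemma list_argmin {A : Type} (f : A -> R) (l : list A) :
  l <> nil -> exists x, In x l /\ forall y, In y l -> f x <= f y.
Proof.
  induction l as [|a [|b l] IH]; intro N; [congruence| |].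
  - exists a. split; [left; reflexivity|]. intros y [<-|[]]. lra.
  - destruct IH as [x [Hx Hmin]]; [discriminate|].
    destruct (Rle_or_lt (f a) (f x)) as [Ha|Ha].
    + exists a. split; [left; reflexivity|]. intros y [<-|Hy]; [lra|]. specialize (Hmin y Hy). lra.
    + exists x. split; [right; exact Hx|]. intros y [<-|Hy]; [lra|auto].
Qed.

Lemma list_argmax {A : Type} (f : A -> R) (l : list A) :
  l <> nil -> exists x, In x l /\ forall y, In y l -> f y <= f x.
Proof.
  intros N. destruct (list_argmin (fun x => - f x) l N) as [x [Hx H]].
  exists x. split; auto. intros y Hy. specialize (H y Hy). lra.
Qed.

Section IncreasingBijection.
Variables (h h' : R -> R).
Hypotheses (hh' : forall t, h (h' t) = t) (h'h : forall t, h' (h t) = t).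
Hypothesis h_incr : strict_increasing h.

Let h'_incr : strict_increasing h' := strict_increasing_inverse h h' hh' h_incr.

Lemma increasing_bijection_near_fixed p e : h p = p -> 0 < e ->
  exists e', 0 < e' /\ forall x, Rabs (x - p) < e' -> Rabs (h' x - p) < e.
Proof.
  intros Hp He.
  assert (lo : h (p - e / 2) < p) by (rewrite <- Hp at 2; apply h_incr; lra).
  assert (hi : p < h (p + e / 2)) by (rewrite <- Hp at 1; apply h_incr; lra).
  exists (Rmin (p - h (p - e / 2)) (h (p + e / 2) - p)). split; [apply Rmin_glb_lt; lra|].
  intros x Hx. apply Rabs_def2 in Hx.
  pose proof (Rmin_l (p - h (p - e / 2)) (h (p + e / 2) - p)).
  pose proof (Rmin_r (p - h (p - e / 2)) (h (p + e / 2) - p)).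
  assert (h' x < p + e / 2) by (rewrite <- (h'h (p + e / 2)); apply h'_incr; lra).
  assert (p - e / 2 < h' x) by (rewrite <- (h'h (p - e / 2)); apply h'_incr; lra).
  apply Rabs_def1; lra.
Qed.

Lemma increasing_bijection_near_infinity M :
  exists M', forall x, M' < Rabs x -> M < Rabs (h' x).
Proof.
  exists (Rmax (Rabs (h (Rabs M))) (Rabs (h (- Rabs M)))). intros x Hx.
  pose proof (Rmax_l (Rabs (h (Rabs M))) (Rabs (h (- Rabs M)))).
  pose proof (Rmax_r (Rabs (h (Rabs M))) (Rabs (h (- Rabs M)))).
  pose proof (Rle_abs M). pose proof (Rle_abs (h (Rabs M))).
  pose proof (Rle_abs (- h (- Rabs M))). rewrite Rabs_Ropp in *.
  destruct (Rle_or_lt 0 x).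
  - rewrite (Rabs_pos_eq x) in Hx by lra.
    assert (Rabs M < h' x) by (rewrite <- (h'h (Rabs M)); apply h'_incr; lra).
    pose proof (Rle_abs (h' x)). lra.
  - rewrite (Rabs_left x) in Hx by lra.
    assert (h' x < - Rabs M) by (rewrite <- (h'h (- Rabs M)); apply h'_incr; lra).
    pose proof (Rle_abs (- h' x)). rewrite Rabs_Ropp in *. lra.
Qed.

End IncreasingBijection.

Lemma strict_increasing_unbounded F G s : (forall t, F (G t) = t) -> strict_increasing F ->
  (s = 1 \/ s = -1) -> forall K T, exists x, T < s * x /\ K <= s * F x.
Proof.
  intros FG Hinc Hs K T. destruct Hs as [-> | ->].
  - exists (Rmax (G K) (T + 1)). pose proof (Rmax_l (G K) (T + 1)). pose proof (Rmax_r (G K) (T + 1)).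
    split; [lra|].
    assert (F (G K) <= F (Rmax (G K) (T + 1))) by (apply strict_increasing_le; auto).
    rewrite FG in H1. lra.
  - exists (Rmin (G (- K)) (- T - 1)).
    pose proof (Rmin_l (G (- K)) (- T - 1)). pose proof (Rmin_r (G (- K)) (- T - 1)).
    split; [lra|].
    assert (F (Rmin (G (- K)) (- T - 1)) <= F (G (- K))) by (apply strict_increasing_le; auto).
    rewrite FG in H1. lra.
Qed.

Lemma continuous_injective_between (h : R -> R) : continuity h ->
  (forall a b, h a = h b -> a = b) ->
  forall a b c, a < b < c -> (h a < h b < h c) \/ (h c < h b < h a).
Proof.
  intros Hc Hi a b c [Hab Hbc].
  assert (IVT' : forall u v y, u < v -> (h u < y < h v \/ h v < y < h u) -> exists z, u <= z <= v /\ h z = y).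
  { intros u v y Huv Hy.
    assert (Cy : continuity (fct_cte y)) by (apply continuity_const; intros ? ?; reflexivity).
    destruct Hy as [Hy|Hy].
    - destruct (IVT (fun z => h z - y) u v (continuity_minus _ _ Hc Cy)) as [z [Hz E]]; [lra..|].
      exists z. split; [exact Hz|lra].
    - destruct (IVT (fun z => y - h z) u v (continuity_minus _ _ Cy Hc)) as [z [Hz E]]; [lra..|].
      exists z. split; [exact Hz|lra]. }
  assert (N1 : h a <> h b) by (intro E; apply Hi in E; lra).
  assert (N2 : h b <> h c) by (intro E; apply Hi in E; lra).
  assert (N3 : h a <> h c) by (intro E; apply Hi in E; lra).
  destruct (Rdichotomy _ _ N1), (Rdichotomy _ _ N2), (Rdichotomy _ _ N3); try lra; exfalso.
  - destruct (IVT' a b (h c)) as [z [Hz E]]; [lra|lra|]. apply Hi in E. lra.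
  - destruct (IVT' b c (h a)) as [z [Hz E]]; [lra|lra|]. apply Hi in E. lra.
  - destruct (IVT' b c (h a)) as [z [Hz E]]; [lra|lra|]. apply Hi in E. lra.
  - destruct (IVT' a b (h c)) as [z [Hz E]]; [lra|lra|]. apply Hi in E. lra.
Qed.

Lemma continuous_injective_increasing (h : R -> R) u v : continuity h ->
  (forall a b, h a = h b -> a = b) -> u < v -> h u < h v -> strict_increasing h.
Proof.
  intros Hc Hi Huv Hh x y Hxy.
  pose proof (continuous_injective_between h Hc Hi) as B.
  set (M := Rmax (Rmax x y) (Rmax u v) + 1).
  pose proof (Rmax_l (Rmax x y) (Rmax u v)). pose proof (Rmax_r (Rmax x y) (Rmax u v)).
  pose proof (Rmax_l x y). pose proof (Rmax_r x y). pose proof (Rmax_l u v). pose proof (Rmax_r u v).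
  assert (HM : Rmax (Rmax x y) (Rmax u v) < M) by (unfold M; lra).
  assert (uM : h u < h M) by (destruct (B u v M); lra).
  assert (yM : h y < h M).
  { destruct (Rtotal_order u y) as [L|[<-|G]]; [|exact uM|].
    - destruct (B u y M); lra.
    - destruct (B y u M); lra. }
  destruct (B x y M); lra.
Qed.

(** * A free pair of increasing bijections *)

Lemma commutator_disjoint_supports (D : R -> Prop) (phi phi' psi psi' : R -> R)
    (SA SB : R -> Prop) :
  (forall x, phi' (phi x) = x) -> (forall x, phi (phi' x) = x) ->
  (forall x, psi' (psi x) = x) -> (forall x, psi (psi' x) = x) ->
  (forall x, D x -> D (phi x) /\ D (phi' x) /\ D (psi x) /\ D (psi' x)) ->
  (forall x, D x -> ~ SA x -> phi x = x) -> (forall x, D x -> ~ SB x -> psi x = x) ->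
  (forall x, SA x -> SB x -> False) ->
  forall x, D x -> phi (psi (phi' (psi' x))) = x.
Proof.
  intros P1 P2 S1 S2 HD HA HB HAB.
  assert (fixed_of_image : forall (f f' : R -> R) z, (forall x, f' (f x) = x) ->
            f (f z) = f z -> f z = z).
  { intros f f' z Hf E. rewrite <- (Hf (f z)), E, Hf. reflexivity. }
  assert (Comm : forall z, D z -> phi (psi z) = psi (phi z)).
  { intros z Hz. destruct (HD z Hz) as [D1 [_ [D3 _]]].
    destruct (classic (SB z)) as [Bz|Bz].
    - assert (Az : phi z = z) by (apply HA; auto; intro; eapply HAB; eauto).
      rewrite Az. destruct (classic (SB (psi z))) as [Bz'|Bz'].
      + apply HA; auto. intro; eapply HAB; eauto.
      + assert (E : psi z = z) by (apply (fixed_of_image psi psi'); auto).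
        rewrite E, Az. reflexivity.
    - assert (Bz2 : psi z = z) by (apply HB; auto). rewrite Bz2.
      destruct (classic (SA (phi z))) as [Az'|Az'].
      + symmetry. apply HB; auto. intro; eapply HAB; eauto.
      + assert (E : phi z = z) by (apply (fixed_of_image phi phi'); auto).
        rewrite E, Bz2. reflexivity. }
  intros x Hx. destruct (HD x Hx) as [_ [_ [_ D4]]]. destruct (HD _ D4) as [_ [D2 _]].
  rewrite Comm by auto. rewrite P2, S2. reflexivity.
Qed.

Lemma least_support_bound (phi : R -> R) d0 :
  (exists x, phi x <> x) -> (forall x, d0 < x -> phi x = x) ->
  exists d, d <= d0 /\ (forall x, d < x -> phi x = x) /\
    (forall b, (forall x, b < x -> phi x = x) -> d <= b).
Proof.
  intros [x0 Hx0] Hd0.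
  assert (Hbound : forall b x, (forall x, b < x -> phi x = x) -> phi x <> x -> x <= b).
  { intros b x Hb Hx. apply Rnot_lt_le. intro. apply Hx, Hb; assumption. }
  destruct (lub_exists (fun x => phi x <> x) d0 x0) as [d [Hub Hleast]];
    [intros; apply (Hbound d0); auto|exact Hx0|].
  exists d. split; [|split].
  - apply Hleast. intros x Hx. apply (Hbound d0); auto.
  - intros x Hx. apply NNPP. intro H. specialize (Hub x H). lra.
  - intros b Hb. apply Hleast. intros x Hx. apply (Hbound b); auto.
Qed.

Definition count_below (l : list R) (b : R) : nat :=
  length (filter (fun e => if Rlt_dec e b then true else false) l).

Lemma count_below_mono l a b : a <= b -> (count_below l a <= count_below l b)%nat.
Proof.
  intro Hab. unfold count_below. induction l as [|y l IH]; simpl; [lia|].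
  destruct (Rlt_dec y a), (Rlt_dec y b); simpl; try lia. lra.
Qed.

Lemma count_below_lt l a b : a < b -> In a l -> (count_below l a < count_below l b)%nat.
Proof.
  intros Hab Hin. induction l as [|x l IH]; [destruct Hin|].
  pose proof (count_below_mono l a b ltac:(lra)). unfold count_below in *. simpl.
  destruct Hin as [->|Hin].
  - destruct (Rlt_dec a a), (Rlt_dec a b); simpl; lia || lra.
  - specialize (IH Hin). destruct (Rlt_dec x a), (Rlt_dec x b); simpl; lia || lra.
Qed.

Section FreeIncreasingPair.
Variables (J : Type) (i j : J) (fx fy : J -> R -> R) (Exc : list R).

Definition is_gen (k : J) : Prop := k = i \/ k = j.
Definition gen_letter (l : J * bool) : Prop := is_gen (fst l).

Definition act_letter (l : J * bool) : R -> R := if snd l then fx (fst l) else fy (fst l).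
Definition act_word (w : list (J * bool)) (t : R) : R := fold_right act_letter t w.

Definition common_fixed (p : R) : Prop := fx i p = p /\ fx j p = p.

Hypothesis i_neq_j : i <> j.
Hypotheses (fx_fy : forall k t, is_gen k -> fx k (fy k t) = t)
           (fy_fx : forall k t, is_gen k -> fy k (fx k t) = t).
Hypothesis fx_incr : forall k, is_gen k -> strict_increasing (fx k).
Hypothesis free :
  forall w, w <> nil -> reduced w -> Forall gen_letter w -> exists t, act_word w t <> t.
Hypothesis germ_at_ends : forall k s, is_gen k -> (s = 1 \/ s = -1) ->
  exists lam mu, 0 < lam /\ affine_germ (fx k) (fun t => t) s lam mu.
Hypothesis germ_at_fixed : forall k s p, is_gen k -> (s = 1 \/ s = -1) -> fx k p = p ->
  exists lam mu, 0 < lam /\ affine_germ (fx k) (fun t => p + / t) s lam mu /\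
    (s = 1 -> (lam = 1 /\ mu = 0) \/ In p Exc).

Lemma gen_letter_inv l : gen_letter l -> gen_letter (letter_inv l).
Proof. exact (fun H => H). Qed.

Lemma act_letter_incr l : gen_letter l -> strict_increasing (act_letter l).
Proof.
  destruct l as [k [|]]; unfold act_letter, gen_letter; simpl; intro Hk;
    [|apply (strict_increasing_inverse (fx k))]; auto.
Qed.

Lemma act_letter_inv_l l t : gen_letter l -> act_letter (letter_inv l) (act_letter l t) = t.
Proof. destruct l as [k [|]]; unfold act_letter, gen_letter; simpl; auto. Qed.

Lemma act_letter_inv_r l t : gen_letter l -> act_letter l (act_letter (letter_inv l) t) = t.
Proof. destruct l as [k [|]]; unfold act_letter, gen_letter; simpl; auto. Qed.

Lemma act_letter_common_fixed l p : gen_letter l -> common_fixed p -> act_letter l p = p.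
Proof.
  intros Hl [Hi Hj].
  assert (Hx : fx (fst l) p = p) by (destruct Hl as [-> | ->]; assumption).
  destruct l as [k [|]]; unfold act_letter; simpl in *; [exact Hx|].
  rewrite <- Hx at 1. apply fy_fx, Hl.
Qed.

Definition gen_letters : list (J * bool) := [(i, true); (i, false); (j, true); (j, false)].

Lemma gen_letter_In l : gen_letter l <-> In l gen_letters.
Proof.
  destruct l as [k [|]]; unfold gen_letter, is_gen; simpl; split.
  - intros [-> | ->]; tauto.
  - intros [E|[E|[E|[E|[]]]]]; inversion E; auto.
  - intros [-> | ->]; tauto.
  - intros [E|[E|[E|[E|[]]]]]; inversion E; auto.
Qed.

Lemma act_word_app a b t : act_word (a ++ b) t = act_word a (act_word b t).
Proof. apply fold_right_app. Qed.

Lemma Forall_gen_word_inv w : Forall gen_letter w -> Forall gen_letter (word_inv w).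
Proof. intro H. apply Forall_rev, Forall_map. exact H. Qed.

Lemma act_word_inv w t : Forall gen_letter w ->
  act_word (word_inv w) (act_word w t) = t /\ act_word w (act_word (word_inv w) t) = t.
Proof.
  revert t. induction w as [|l w IH]; intros t H; [split; reflexivity|].
  inversion H; subst. rewrite word_inv_cons, !act_word_app. simpl. split.
  - rewrite act_letter_inv_l by assumption. apply IH; assumption.
  - rewrite (proj2 (IH _ H3)). apply act_letter_inv_r; assumption.
Qed.

Lemma act_word_incr w : Forall gen_letter w -> strict_increasing (act_word w).
Proof.
  induction w as [|l w IH]; intros H a b Hab; simpl; auto.
  inversion H; subst. apply act_letter_incr; [assumption|apply IH; assumption].
Qed.

Lemma act_word_common_fixed w p : Forall gen_letter w -> common_fixed p -> act_word w p = p.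
Proof.
  induction w as [|l w IH]; intros H Hp; simpl; auto.
  inversion H; subst. rewrite IH; auto. apply act_letter_common_fixed; auto.
Qed.

Lemma act_word_preserves (D : R -> Prop) w x :
  (forall l x, gen_letter l -> D x -> D (act_letter l x)) ->
  Forall gen_letter w -> D x -> D (act_word w x).
Proof.
  intro HD. induction w as [|l w IH]; intros H Hx; simpl; auto.
  inversion H; subst. apply HD; auto.
Qed.

Lemma reduce_word w : Forall gen_letter w ->
  exists w', Forall gen_letter w' /\ reduced w' /\ forall t, act_word w' t = act_word w t.
Proof.
  remember (length w) as n eqn:Hn. revert w Hn.
  induction n as [n IH] using (well_founded_induction Nat.lt_wf_0). intros w -> Hw.
  destruct (classic (reduced w)) as [R|R]; [exists w; auto|].
  assert (Split : exists a b l, w = a ++ l :: letter_inv l :: b).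
  { clear IH Hw. induction w as [|x [|y w] IHw]; simpl in R; [tauto|tauto|].
    destruct (classic (fst x = fst y /\ snd x <> snd y)) as [C|C].
    - rewrite cancel_iff in C. subst y. exists nil, w, x. reflexivity.
    - destruct IHw as [a [b [l E]]]; [tauto|]. exists (x :: a), b, l. rewrite E. reflexivity. }
  destruct Split as [a [b [l ->]]].
  apply Forall_app in Hw. destruct Hw as [Ha Hb]. inversion Hb; subst. inversion H2; subst.
  destruct (IH (length (a ++ b))) with (a ++ b) as [w' [K1 [K2 K3]]]; auto.
  - rewrite !length_app. simpl. lia.
  - apply Forall_app; auto.
  - exists w'. repeat split; auto. intro t. rewrite K3, !act_word_app. simpl.
    rewrite act_letter_inv_r; auto.
Qed.

Lemma exists_gen_letter_avoiding (a1 a2 a3 : J * bool) :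
  exists l, gen_letter l /\ l <> a1 /\ l <> a2 /\ l <> a3.
Proof.
  apply NNPP. intro H.
  assert (F : forall l, gen_letter l -> l = a1 \/ l = a2 \/ l = a3).
  { intros l Hl. apply NNPP. intro C. apply H. exists l. repeat split; auto; intro; apply C; auto. }
  assert (Gi : forall b, gen_letter (i, b)) by (intro; left; reflexivity).
  assert (Gj : forall b, gen_letter (j, b)) by (intro; right; reflexivity).
  destruct (F _ (Gi true)) as [E1|[E1|E1]]; destruct (F _ (Gi false)) as [E2|[E2|E2]];
  destruct (F _ (Gj true)) as [E3|[E3|E3]]; destruct (F _ (Gj false)) as [E4|[E4|E4]];
  congruence.
Qed.

Definition germ_trivial (phi : R -> R) : Prop :=
  (forall p, common_fixed p -> exists e, 0 < e /\ forall x, Rabs (x - p) < e -> phi x = x) /\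
  (exists M, forall x, M < Rabs x -> phi x = x).

Lemma germ_trivial_app a b :
  germ_trivial (act_word a) -> germ_trivial (act_word b) -> germ_trivial (act_word (a ++ b)).
Proof.
  intros [A1 [M1 B1]] [A2 [M2 B2]]. split.
  - intros p Hp. destruct (A1 p Hp) as [e1 [He1 H1]], (A2 p Hp) as [e2 [He2 H2]].
    exists (Rmin e1 e2). split; [apply Rmin_glb_lt; auto|]. intros x Hx.
    pose proof (Rmin_l e1 e2). pose proof (Rmin_r e1 e2).
    rewrite act_word_app, H2, H1 by lra. reflexivity.
  - exists (Rmax M1 M2). intros x Hx. pose proof (Rmax_l M1 M2). pose proof (Rmax_r M1 M2).
    rewrite act_word_app, B2, B1 by lra. reflexivity.
Qed.

Lemma germ_trivial_inv w :
  Forall gen_letter w -> germ_trivial (act_word w) -> germ_trivial (act_word (word_inv w)).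
Proof.
  intros Hw [A [M B]]. split.
  - intros p Hp. destruct (A p Hp) as [e [He H]]. exists e. split; auto. intros x Hx.
    rewrite <- (H x Hx) at 1. apply act_word_inv, Hw.
  - exists M. intros x Hx. rewrite <- (B x Hx) at 1. apply act_word_inv, Hw.
Qed.

Lemma germ_trivial_conj q r : Forall gen_letter q ->
  germ_trivial (act_word r) -> germ_trivial (act_word (q ++ r ++ word_inv q)).
Proof.
  intros Hq [A [M B]].
  assert (qq' : forall t, act_word q (act_word (word_inv q) t) = t)
    by (intro; apply act_word_inv, Hq).
  assert (q'q : forall t, act_word (word_inv q) (act_word q t) = t)
    by (intro; apply act_word_inv, Hq).
  assert (Conj : forall x, act_word r (act_word (word_inv q) x) = act_word (word_inv q) x ->
            act_word (q ++ r ++ word_inv q) x = x).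
  { intros x Hx. rewrite !act_word_app, Hx. apply qq'. }
  split.
  - intros p Hp. destruct (A p Hp) as [e [He H]].
    destruct (increasing_bijection_near_fixed _ _ qq' q'q (act_word_incr q Hq) p e)
      as [e' [He' H']]; [apply act_word_common_fixed; auto|exact He|].
    exists e'. split; auto.
  - destruct (increasing_bijection_near_infinity _ _ qq' q'q (act_word_incr q Hq) M) as [M' H'].
    exists M'. auto.
Qed.

Lemma germ_trivial_commutator a b : Forall gen_letter a -> Forall gen_letter b ->
  germ_trivial (act_word a) -> germ_trivial (act_word b) ->
  germ_trivial (act_word (commutator_word a b)).
Proof.
  intros Ha Hb Ga Gb. unfold commutator_word.
  repeat apply germ_trivial_app; auto; apply germ_trivial_inv; auto.
Qed.

(* The infimum of the orbit of [y] would be a common fixed point. *)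
Lemma push_below x y : (forall p, x <= p <= y -> ~ common_fixed p) ->
  exists h, Forall gen_letter h /\ act_word h y < x.
Proof.
  intros HF. apply NNPP. intro Hn.
  set (Orb := fun z => exists h, Forall gen_letter h /\ act_word h y = z).
  destruct (glb_exists Orb x y) as [m Hm].
  - intros z [h [Hh <-]]. apply Rnot_lt_le. intro C. apply Hn. exists h. auto.
  - exists nil. split; auto.
  - assert (Hinv : forall l, gen_letter l -> act_letter l m = m).
    { intros l Hl. apply (glb_invariant_fixed _ (act_letter (letter_inv l)) Orb);
        auto using act_letter_inv_l, act_letter_inv_r, act_letter_incr.
      - intros z [h [Hh <-]]. exists (l :: h). split; [constructor|]; auto.
      - intros z [h [Hh <-]]. exists (letter_inv l :: h).
        split; [constructor; auto; apply gen_letter_inv|]; auto. }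
    apply (HF m).
    + split; [apply (proj2 Hm)|apply (proj1 Hm)].
      * intros z [h [Hh <-]]. apply Rnot_lt_le. intro C. apply Hn. exists h. auto.
      * exists nil. split; auto.
    + split; [apply (Hinv (i, true))|apply (Hinv (j, true))]; unfold gen_letter, is_gen; auto.
Qed.

Lemma push_interval_below c d : c <= d ->
  (forall p, common_fixed p -> p <= d -> forall l, gen_letter l -> p < act_letter l c) ->
  exists h h1 hk, reduced_word h h1 hk /\ Forall gen_letter h /\
    forall l l' z, gen_letter l -> gen_letter l' -> c <= z <= d ->
      act_word h (act_letter l' z) < act_letter l c.
Proof.
  intros Hcd HF.
  destruct (list_argmin (fun l => act_letter l c) gen_letters) as [l0 [G0 Min]]; [discriminate|].
  destruct (list_argmax (fun l => act_letter l d) gen_letters) as [l1 [G1 Max]]; [discriminate|].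
  rewrite <- gen_letter_In in G0, G1.
  set (xl := act_letter l0 c). set (yl := act_letter l1 d).
  assert (Lx : forall l, gen_letter l -> xl <= act_letter l c)
    by (intros l Hl; apply Min, gen_letter_In, Hl).
  assert (Ly : forall l z, gen_letter l -> z <= d -> act_letter l z <= yl).
  { intros l z Hl Hz. apply Rle_trans with (act_letter l d); [|apply Max, gen_letter_In, Hl].
    apply strict_increasing_le; [apply act_letter_incr, Hl|exact Hz]. }
  assert (NoFix : forall p, xl <= p <= yl -> ~ common_fixed p).
  { intros p Hp Fp. destruct (Rle_or_lt p d) as [Hpd|Hpd].
    - specialize (HF p Fp Hpd l0 G0). fold xl in HF. lra.
    - assert (act_letter l1 d < act_letter l1 p) by (apply act_letter_incr; auto).
      rewrite (act_letter_common_fixed l1 p) in H by auto. fold yl in H. lra. }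
  destruct (push_below xl yl NoFix) as [h0 [Hh0 Push0]].
  destruct (reduce_word h0 Hh0) as [h [Hh [Rh Eh]]].
  assert (Push : act_word h yl < xl) by (rewrite Eh; exact Push0).
  destruct (reduced_word_of_reduced h Rh) as [h1 [hk Rh']].
  { intros ->. simpl in Push. specialize (Ly l0 c G0 Hcd). fold xl in Ly. lra. }
  exists h, h1, hk. split; [exact Rh'|split; [exact Hh|]].
  intros l l' z Hl Hl' [_ Hz]. apply Rle_lt_trans with (act_word h yl).
  - apply strict_increasing_le; [apply act_word_incr, Hh|apply Ly; assumption].
  - apply Rlt_le_trans with xl; [exact Push|apply Lx, Hl].
Qed.

Lemma exists_conjugator s t c d : c <= d ->
  (forall p, common_fixed p -> p <= d -> forall l, gen_letter l -> p < act_letter l c) ->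
  exists q u v, reduced_word q u v /\ Forall gen_letter q /\
    u <> s /\ u <> letter_inv t /\ v <> letter_inv s /\ v <> t /\
    forall z, c <= z <= d -> act_word q z < c.
Proof.
  intros Hcd HF.
  destruct (push_interval_below c d Hcd HF) as [h [h1 [hk [Rh [Hh Push]]]]].
  destruct (exists_gen_letter_avoiding s (letter_inv t) (letter_inv h1))
    as [u [Gu [Nu1 [Nu2 Nu3]]]].
  destruct (exists_gen_letter_avoiding (letter_inv s) t (letter_inv hk))
    as [v [Gv [Nv1 [Nv2 Nv3]]]].
  exists ([u] ++ h ++ [v]), u, v. split; [|split; [|do 4 (split; [assumption|])]].
  - apply (reduced_word_app [u] _ u u h1); [apply reduced_word_single| |].
    + exact (reduced_word_app h [v] h1 hk v v Rh (reduced_word_single v) Nv3).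
    + intro E. apply Nu3. rewrite E. symmetry. apply letter_inv_involutive.
  - apply Forall_app. split; [constructor; auto|apply Forall_app; split; auto].
  - intros z Hz. rewrite !act_word_app. simpl.
    rewrite <- (act_letter_inv_r u c Gu). apply act_letter_incr; [exact Gu|].
    apply Push; auto using gen_letter_inv.
Qed.

(* Commutator of [r] with a conjugate [q r q^-1] whose support, inside the
   domain [D], lies to the left of that of [r]. *)
Lemma kill_on_domain r s t (D : R -> Prop) c d :
  reduced_word r s t -> Forall gen_letter r -> germ_trivial (act_word r) -> c <= d ->
  (forall l x, gen_letter l -> D x -> D (act_letter l x)) ->
  (forall x, D x -> x < c \/ d < x -> act_word r x = x) ->
  (forall p, common_fixed p -> p <= d -> forall l, gen_letter l -> p < act_letter l c) ->
  exists r' s' t', reduced_word r' s' t' /\ Forall gen_letter r' /\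
    germ_trivial (act_word r') /\ forall x, D x -> act_word r' x = x.
Proof.
  intros Rr Hr Gr Hcd HD Hsupp HF.
  destruct (exists_conjugator s t c d Hcd HF)
    as [q [u [v [Rq [Hq [Nu1 [Nu2 [Nv1 [Nv2 Push]]]]]]]]].
  set (A := q ++ r ++ word_inv q).
  assert (HA : Forall gen_letter A)
    by (apply Forall_app; split; [|apply Forall_app; split; [|apply Forall_gen_word_inv]]; auto).
  assert (RA : reduced_word A u (letter_inv u)).
  { apply (reduced_word_app q _ u v s); [exact Rq| |intro E; apply Nv1; rewrite E; symmetry; apply letter_inv_involutive].
    apply (reduced_word_app r _ s t (letter_inv v)); [exact Rr|apply reduced_word_inv, Rq|].
    intro E. apply Nv2, letter_inv_inj, E. }
  exists (commutator_word A r), u, (letter_inv s). split; [|split; [|split]].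
  - apply (reduced_word_commutator A r u (letter_inv u) s t RA Rr).
    + rewrite letter_inv_involutive. auto.
    + intro E. apply Nu2. rewrite <- E, letter_inv_involutive. reflexivity.
    + intro E. apply Nu2. rewrite E, letter_inv_involutive. reflexivity.
  - unfold commutator_word. repeat (apply Forall_app; split); auto using Forall_gen_word_inv.
  - apply germ_trivial_commutator; auto. apply germ_trivial_conj; auto.
  - intros x Hx. unfold commutator_word. rewrite !act_word_app.
    apply (commutator_disjoint_supports D (act_word A) (act_word (word_inv A))
             (act_word r) (act_word (word_inv r)) (fun z => z < c) (fun z => c <= z <= d));
      auto; try (intro; apply act_word_inv; assumption).
    + intros y Hy. repeat split; apply act_word_preserves; auto using Forall_gen_word_inv.
    + intros y Hy Hyc. set (z := act_word (word_inv q) y).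
      assert (Eq : act_word q z = y) by apply act_word_inv, Hq.
      assert (Hz : D z) by (apply act_word_preserves; auto using Forall_gen_word_inv).
      unfold A. rewrite !act_word_app. fold z.
      destruct (classic (c <= z <= d)) as [Hz'|Hz'].
      * exfalso. apply Hyc. rewrite <- Eq. apply Push, Hz'.
      * rewrite Hsupp; [exact Eq|exact Hz|lra].
    + intros y Hy Hny. apply Hsupp; auto. lra.
    + intros y H1 H2. lra.
Qed.

Lemma last_common_fixed_below d p0 : common_fixed p0 -> p0 <= d ->
  exists a, common_fixed a /\ a <= d /\ forall p, common_fixed p -> p <= d -> p <= a.
Proof.
  intros F0 H0. set (S := fun p => common_fixed p /\ p <= d).
  destruct (lub_exists S d p0) as [a Ha]; [intros p [_ Hp]; exact Hp|split; auto|].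
  assert (Hinv : forall l, gen_letter l -> act_letter l a = a).
  { intros l Hl. apply (lub_invariant_fixed _ (act_letter (letter_inv l)) S);
      auto using act_letter_inv_l, act_letter_inv_r, act_letter_incr;
      intros z [Fz Hz]; rewrite act_letter_common_fixed; auto using gen_letter_inv; split; auto. }
  exists a. split; [|split].
  - split; [apply (Hinv (i, true))|apply (Hinv (j, true))]; unfold gen_letter, is_gen; auto.
  - apply (proj2 Ha). intros p [_ Hp]. exact Hp.
  - intros p Fp Hp. apply (proj1 Ha). split; auto.
Qed.

(* If both right germs at [a] were trivial, points just right of [a] would be fixed. *)
Lemma isolated_common_fixed_in_Exc a d : common_fixed a -> a < d ->
  (forall p, common_fixed p -> p <= d -> p <= a) -> In a Exc.
Proof.
  intros [Fi Fj] Had Hlast.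
  assert (Gi : is_gen i) by (left; reflexivity). assert (Gj : is_gen j) by (right; reflexivity).
  destruct (germ_at_fixed i 1 a Gi (or_introl eq_refl) Fi) as [l1 [m1 [_ [[T1 G1] C1]]]].
  destruct (germ_at_fixed j 1 a Gj (or_introl eq_refl) Fj) as [l2 [m2 [_ [[T2 G2] C2]]]].
  destruct (C1 eq_refl) as [[-> ->]|?]; [|assumption].
  destruct (C2 eq_refl) as [[-> ->]|?]; [|assumption].
  exfalso.
  set (T := Rmax (Rmax T1 T2) (/ (d - a)) + 1).
  pose proof (Rmax_l (Rmax T1 T2) (/ (d - a))). pose proof (Rmax_r (Rmax T1 T2) (/ (d - a))).
  pose proof (Rmax_l T1 T2). pose proof (Rmax_r T1 T2).
  assert (P0 : 0 < / (d - a)) by (apply Rinv_0_lt_compat; lra).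
  assert (X1 : / T < d - a).
  { replace (d - a) with (/ / (d - a)) by (field; lra).
    apply Rinv_lt_contravar; [apply Rmult_lt_0_compat|]; unfold T; lra. }
  assert (X2 : 0 < / T) by (apply Rinv_0_lt_compat; unfold T; lra).
  assert (Fix : common_fixed (a + / T)).
  { split; [rewrite G1|rewrite G2]; try (unfold T; lra); f_equal; f_equal; ring. }
  specialize (Hlast _ Fix ltac:(lra)). lra.
Qed.

(* [d] is the top of the support of [r], [a] the last common fixed point below [d]. *)
Lemma shrink_support r s t d0 : reduced_word r s t -> Forall gen_letter r ->
  germ_trivial (act_word r) -> (forall x, d0 < x -> act_word r x = x) ->
  exists r' s' t' a, reduced_word r' s' t' /\ Forall gen_letter r' /\
    germ_trivial (act_word r') /\ (forall x, a < x -> act_word r' x = x) /\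
    (count_below Exc a < count_below Exc d0)%nat.
Proof.
  intros Rr Hr Gr Hd0.
  destruct (least_support_bound (act_word r) d0) as [d [dd0 [Hd Hleast]]];
    [apply (free r (reduced_word_nonnil _ _ _ Rr) (proj1 Rr) Hr)|exact Hd0|].
  assert (NFd : ~ common_fixed d).
  { intro Fd. destruct (proj1 Gr d Fd) as [e [He Hid]].
    assert (d <= d - e / 2); [|lra].
    apply Hleast. intros x Hx. destruct (Rlt_or_le d x); [auto|]. apply Hid, Rabs_def1; lra. }
  destruct (classic (exists p, common_fixed p /\ p <= d)) as [[p0 [F0 H0]]|NoF].
  - destruct (last_common_fixed_below d p0 F0 H0) as [a [Fa [Had Hlast]]].
    assert (Had' : a < d) by (destruct Had; [assumption|subst; contradiction]).
    destruct (proj1 Gr a Fa) as [e [He Hida]].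
    destruct (kill_on_domain r s t (fun x => a < x) (Rmin (a + e / 2) d) d Rr Hr Gr)
      as [r' [s' [t' [R' [H' [G' K']]]]]].
    + apply Rmin_r.
    + intros l x Hl Hx. rewrite <- (act_letter_common_fixed l a Hl Fa). apply act_letter_incr; auto.
    + pose proof (Rmin_l (a + e / 2) d). intros x Hx [Hxc|Hxd]; [|auto].
      apply Hida, Rabs_def1; lra.
    + intros p Fp Hp l Hl. specialize (Hlast p Fp Hp).
      apply Rle_lt_trans with (act_letter l a); [rewrite act_letter_common_fixed; auto|].
      apply act_letter_incr; [exact Hl|apply Rmin_glb_lt; lra].
    + exists r', s', t', a. do 4 (split; [assumption|]).
      apply count_below_lt; [lra|]. apply (isolated_common_fixed_in_Exc a d); auto.
  - exfalso. destruct (proj2 Gr) as [M HM].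
    destruct (kill_on_domain r s t (fun _ => True) (Rmin (- Rabs M - 1) d) d Rr Hr Gr)
      as [r' [s' [t' [R' [H' [G' K']]]]]]; auto using Rmin_r.
    + pose proof (Rmin_l (- Rabs M - 1) d). intros x _ [Hx|Hx]; [|auto].
      apply HM. pose proof (Rle_abs (- x)). rewrite Rabs_Ropp in *. pose proof (Rle_abs M). lra.
    + intros p Fp Hp. exfalso. apply NoF. eauto.
    + destruct (free r' (reduced_word_nonnil _ _ _ R') (proj1 R') H') as [x0 Hx0]. auto.
Qed.

Lemma no_germ_trivial_word r s t d0 : reduced_word r s t -> Forall gen_letter r ->
  germ_trivial (act_word r) -> (forall x, d0 < x -> act_word r x = x) -> False.
Proof.
  remember (count_below Exc d0) as n eqn:Hn. revert r s t d0 Hn.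
  induction n as [n IH] using (well_founded_induction Nat.lt_wf_0).
  intros r s t d0 -> Rr Hr Gr Hd0.
  destruct (shrink_support r s t d0 Rr Hr Gr Hd0)
    as [r' [s' [t' [a [R' [H' [G' [K' Lt]]]]]]]].
  exact (IH _ Lt r' s' t' a eq_refl R' H' G' K').
Qed.

Lemma affine_germ_commutator_word a b kap s l1 m1 l2 m2 :
  (s = 1 \/ s = -1) -> 0 < l1 -> 0 < l2 -> Forall gen_letter a -> Forall gen_letter b ->
  affine_germ (act_word a) kap s l1 m1 -> affine_germ (act_word b) kap s l2 m2 ->
  affine_germ (act_word (commutator_word a b)) kap s 1 (m1 * (1 - l2) - m2 * (1 - l1)).
Proof.
  intros Hs P1 P2 Ha Hb Ga Gb.
  eapply affine_germ_ext;
    [| reflexivity | reflexivity |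
     exact (affine_germ_commutator _ (act_word (word_inv a)) _ (act_word (word_inv b)) _ _ _ _ _ _
              Hs P1 P2 (fun x => proj1 (act_word_inv a x Ha)) (fun x => proj1 (act_word_inv b x Hb))
              Ga Gb)].
  intro x. unfold commutator_word. rewrite !act_word_app. reflexivity.
Qed.

Definition double_commutator_word : list (J * bool) :=
  commutator_word (commutator_word [(i, true)] [(j, true)])
                  (commutator_word [(i, false)] [(j, false)]).

Lemma double_commutator_word_reduced : reduced double_commutator_word.
Proof.
  unfold double_commutator_word, commutator_word, word_inv, letter_inv. simpl.
  repeat split; intros [E N]; simpl in *; try (apply N; reflexivity); apply i_neq_j; auto.
Qed.

Lemma double_commutator_word_gen : Forall gen_letter double_commutator_word.
Proof.
  unfold double_commutator_word, commutator_word, word_inv, letter_inv. simpl.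
  repeat apply Forall_cons; try apply Forall_nil; unfold gen_letter, is_gen; simpl; auto.
Qed.

Lemma affine_germ_double_commutator kap s : (s = 1 \/ s = -1) ->
  (forall k, is_gen k -> exists lam mu, 0 < lam /\ affine_germ (fx k) kap s lam mu) ->
  affine_germ (act_word double_commutator_word) kap s 1 0.
Proof.
  intros Hs HG.
  assert (Gi : is_gen i) by (left; reflexivity). assert (Gj : is_gen j) by (right; reflexivity).
  assert (Letters : forall k b, is_gen k ->
            exists lam mu, 0 < lam /\ affine_germ (act_word [(k, b)]) kap s lam mu).
  { intros k [|] Hk; destruct (HG k Hk) as [l [m [Hl G]]].
    - exists l, m. auto.
    - exists (/ l), (- m / l). split; [apply Rinv_0_lt_compat, Hl|].
      exact (affine_germ_inv _ (fy k) _ _ _ _ Hs Hl (fun x => fy_fx k x Hk) G). }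
  destruct (Letters i true Gi) as [l1 [m1 [P1 G1]]].
  destruct (Letters j true Gj) as [l2 [m2 [P2 G2]]].
  destruct (Letters i false Gi) as [l3 [m3 [P3 G3]]].
  destruct (Letters j false Gj) as [l4 [m4 [P4 G4]]].
  assert (Hg : forall k b, is_gen k -> Forall gen_letter [(k, b)]) by (intros; apply Forall_cons; auto).
  assert (Hc : forall k b k' b', is_gen k -> is_gen k' ->
            Forall gen_letter (commutator_word [(k, b)] [(k', b')])).
  { intros. unfold commutator_word. repeat (apply Forall_app; split); auto using Forall_gen_word_inv. }
  pose proof (affine_germ_commutator_word _ _ _ _ _ _ _ _ Hs P1 P2 (Hg _ _ Gi) (Hg _ _ Gj) G1 G2) as C1.
  pose proof (affine_germ_commutator_word _ _ _ _ _ _ _ _ Hs P3 P4 (Hg _ _ Gi) (Hg _ _ Gj) G3 G4) as C2.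
  pose proof (affine_germ_commutator_word _ _ _ _ _ _ _ _ Hs Rlt_0_1 Rlt_0_1
                (Hc _ _ _ _ Gi Gj) (Hc _ _ _ _ Gi Gj) C1 C2) as C.
  eapply affine_germ_ext; [reflexivity|reflexivity| |exact C]; ring.
Qed.

Lemma germ_trivial_double_commutator : germ_trivial (act_word double_commutator_word).
Proof.
  split.
  - intros p Fp. apply affine_germ_id_near_point.
    + apply act_word_common_fixed; [apply double_commutator_word_gen|exact Fp].
    + apply affine_germ_double_commutator; [left; reflexivity|]. intros k Hk.
      destruct (germ_at_fixed k 1 p Hk (or_introl eq_refl)) as [l [m [P [G _]]]];
        [destruct Hk as [-> | ->]; apply Fp|eauto].
    + apply affine_germ_double_commutator; [right; reflexivity|]. intros k Hk.
      destruct (germ_at_fixed k (-1) p Hk (or_intror eq_refl)) as [l [m [P [G _]]]];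
        [destruct Hk as [-> | ->]; apply Fp|eauto].
  - apply affine_germ_id_near_infinity; apply affine_germ_double_commutator; auto.
Qed.

Lemma free_increasing_pair_absurd : False.
Proof.
  destruct (reduced_word_of_reduced _ double_commutator_word_reduced) as [s [t R0]];
    [discriminate|].
  destruct (proj2 germ_trivial_double_commutator) as [M HM].
  apply (no_germ_trivial_word _ s t (Rabs M) R0 double_commutator_word_gen
           germ_trivial_double_commutator).
  intros x Hx. apply HM. pose proof (Rle_abs x). pose proof (Rle_abs M). lra.
Qed.

End FreeIncreasingPair.

(** * Moebius maps *)

Lemma affine_same_sign c d u v : u <= v -> (forall z, u <= z <= v -> c * z + d <> 0) ->
  0 < (c * u + d) * (c * v + d).
Proof.
  intros Huv Hne. set (P := c * u + d). set (Q := c * v + d).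
  apply Rnot_le_lt. intro HPQ.
  destruct (Req_dec P Q) as [EPQ|NPQ].
  - apply (Hne u); [lra|]. fold P. rewrite EPQ in HPQ |- *. nra.
  - set (t := P / (P - Q)).
    assert (Ht : t * (P - Q) = P) by (unfold t; field; lra).
    assert (Ht01 : 0 <= t <= 1).
    { assert (t * (1 - t) * ((P - Q) * (P - Q)) = - (P * Q)).
      { replace (t * (1 - t) * ((P - Q) * (P - Q))) with (t * (P - Q) * (P - Q - t * (P - Q)))
          by ring. rewrite Ht. ring. }
      assert (0 < (P - Q) * (P - Q)) by (apply Rsqr_pos_lt; lra).
      assert (0 <= t * (1 - t)) by nra. nra. }
    apply (Hne (u + (v - u) * t)); [nra|].
    replace (c * (u + (v - u) * t) + d) with (P - t * (P - Q)) by (unfold P, Q; ring). lra.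
Qed.

(* The derivative of a determinant-one Moebius map is [1 / (c x + d)^2 > 0]. *)
Lemma mobius_increasing_on a b c d u v : a * d - b * c = 1 -> u < v ->
  (forall z, u <= z <= v -> c * z + d <> 0) ->
  (a * u + b) / (c * u + d) < (a * v + b) / (c * v + d).
Proof.
  intros Hdet Huv Hne.
  assert (HPQ := affine_same_sign c d u v ltac:(lra) Hne).
  assert (Hu : c * u + d <> 0) by (apply Hne; lra).
  assert (Hv : c * v + d <> 0) by (apply Hne; lra).
  assert (E : (a * v + b) / (c * v + d) - (a * u + b) / (c * u + d) =
              (v - u) * (a * d - b * c) / ((c * u + d) * (c * v + d))) by (field; auto).
  rewrite Hdet, Rmult_1_r in E.
  assert (0 < (v - u) / ((c * u + d) * (c * v + d))) by (apply Rdiv_lt_0_compat; lra).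
  lra.
Qed.

(* Solutions of [c p^2 + (d - a) p - b = 0], the fixed points of [(a, b, c, d)]
   in the chart [x]; empty for the identity matrix. *)
Definition mobius_fixed_points (m : R * R * R * R) : list R :=
  let '(a, b, c, d) := m in
  if Req_EM_T c 0 then (if Req_EM_T (d - a) 0 then nil else [b / (d - a)])
  else [(- (d - a) + sqrt ((d - a) * (d - a) + 4 * b * c)) / (2 * c);
        (- (d - a) - sqrt ((d - a) * (d - a) + 4 * b * c)) / (2 * c)].

Lemma In_mobius_fixed_points a b c d p : a * p + b = p * (c * p + d) ->
  ~ (c = 0 /\ d = a) -> In p (mobius_fixed_points (a, b, c, d)).
Proof.
  intros H N. unfold mobius_fixed_points. destruct (Req_EM_T c 0) as [Hc|Hc].
  - destruct (Req_EM_T (d - a) 0) as [Hd|Hd]; [exfalso; apply N; split; lra|].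
    left. subst c. field_simplify_eq; auto. lra.
  - set (s := 2 * c * p + (d - a)).
    assert (Hs : (d - a) * (d - a) + 4 * b * c = s * s) by (unfold s; nra).
    rewrite Hs. destruct (Rle_or_lt 0 s).
    + left. rewrite sqrt_square by auto. unfold s. field. auto.
    + right; left. replace (s * s) with ((- s) * (- s)) by ring.
      rewrite sqrt_square by lra. unfold s. field. auto.
Qed.

Lemma mobius_fixed_point_denominator a b c d p : a * d - b * c = 1 ->
  a * p + b = p * (c * p + d) -> c * p + d <> 0.
Proof.
  intros Hdet Hfix E. rewrite E in Hfix.
  replace (a * d - b * c) with ((a * p + b) * (- c) + a * (c * p + d)) in Hdet by ring.
  rewrite E in Hdet. nra.
Qed.

(* Conjugating by the chart [t |-> p + / t] around a fixed point [p] turns a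
   Moebius map into the affine map below. *)
Lemma mobius_at_fixed_point a b c d p t : a * d - b * c = 1 ->
  a * p + b = p * (c * p + d) -> t <> 0 -> c * (p + / t) + d <> 0 ->
  (a * (p + / t) + b) / (c * (p + / t) + d) =
  p + / ((c * p + d) * (c * p + d) * t + c * (c * p + d)).
Proof.
  intros Hdet Hfix Ht Hn.
  pose proof (mobius_fixed_point_denominator a b c d p Hdet Hfix) as D0.
  set (D := c * p + d) in *.
  assert (Dt : D * t + c <> 0).
  { intro E. apply Hn. replace (c * (p + / t) + d) with ((D * t + c) / t) by (unfold D; field; auto).
    rewrite E. unfold Rdiv. ring. }
  assert (Eb : b = p * D - a * p) by (unfold D in *; lra).
  assert (Ea : a = p * c + / D).
  { apply (Rmult_eq_reg_r D); [|exact D0]. field_simplify; [|exact D0].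
    rewrite Eb in Hdet. unfold D in *. lra. }
  replace (D * D * t + c * D) with (D * (D * t + c)) by ring.
  rewrite Eb, Ea. replace (c * (p + / t) + d) with ((D * t + c) / t) by (unfold D; field; auto).
  field. repeat split; auto.
Qed.

Lemma eq0_of_small_solutions (al be ga de : R) :
  (forall eta rho, 0 < eta -> 0 < rho ->
     exists u v, Rabs u < rho /\ Rabs v < eta /\ al * u + be = v * (ga * u + de)) ->
  be = 0.
Proof.
  intro H. apply NNPP. intro Hb. set (B := Rabs be). assert (HB : 0 < B) by (apply Rabs_pos_lt; auto).
  pose proof (Rabs_pos al). pose proof (Rabs_pos ga). pose proof (Rabs_pos de).
  set (eta := B / (2 * (Rabs de + Rabs ga + 1))). set (rho := Rmin 1 (B / (2 * (Rabs al + 1)))).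
  assert (He : 0 < eta) by (unfold eta; apply Rdiv_lt_0_compat; lra).
  assert (Hr : 0 < rho) by (apply Rmin_glb_lt; [lra|apply Rdiv_lt_0_compat; lra]).
  destruct (H eta rho He Hr) as [u [v [Hu [Hv E]]]].
  pose proof (Rabs_pos u). pose proof (Rabs_pos v).
  assert (Hu1 : Rabs u < 1) by (eapply Rlt_le_trans; [exact Hu|apply Rmin_l]).
  assert (Hu2 : Rabs u * (2 * (Rabs al + 1)) < B).
  { apply Rlt_le_trans with (B / (2 * (Rabs al + 1)) * (2 * (Rabs al + 1))); [|right; field; lra].
    apply Rmult_lt_compat_r; [lra|]. eapply Rlt_le_trans; [exact Hu|apply Rmin_r]. }
  assert (Hv2 : Rabs v * (2 * (Rabs de + Rabs ga + 1)) < B).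
  { apply Rlt_le_trans with (eta * (2 * (Rabs de + Rabs ga + 1))); [|right; unfold eta; field; lra].
    apply Rmult_lt_compat_r; lra. }
  assert (F1 : B <= Rabs (al * u + be) + Rabs al * Rabs u).
  { rewrite <- Rabs_mult. unfold B. replace be with ((al * u + be) + - (al * u)) at 1 by ring.
    eapply Rle_trans; [apply Rabs_triang|]. rewrite Rabs_Ropp. lra. }
  assert (F2 : Rabs (ga * u + de) <= Rabs ga * Rabs u + Rabs de)
    by (rewrite <- Rabs_mult; apply Rabs_triang).
  assert (Rabs ga * Rabs u <= Rabs ga) by nra.
  assert (Rabs v * Rabs (ga * u + de) <= Rabs v * (Rabs ga + Rabs de))
    by (apply Rmult_le_compat_l; lra).
  rewrite E, Rabs_mult in F1. nra.
Qed.

Lemma mobius_bounded_near_infinity a b c d x : a * d - b * c = 1 -> c <> 0 ->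
  (1 + Rabs d) / Rabs c + 1 <= Rabs x ->
  c * x + d <> 0 /\ Rabs ((a * x + b) / (c * x + d)) < Rabs (a / c) + Rabs (/ c) + 1.
Proof.
  intros Hdet Hc Hx.
  assert (Pc : 0 < Rabs c) by (apply Rabs_pos_lt; auto).
  assert (Hge : 1 + Rabs c <= Rabs (c * x + d)).
  { assert (A : Rabs c * ((1 + Rabs d) / Rabs c + 1) <= Rabs c * Rabs x)
      by (apply Rmult_le_compat_l; lra).
    replace (Rabs c * ((1 + Rabs d) / Rabs c + 1)) with (1 + Rabs d + Rabs c) in A by (field; lra).
    rewrite <- Rabs_mult in A.
    pose proof (Rabs_triang (c * x + d) (- d)). rewrite Rabs_Ropp in H.
    replace (c * x + d + - d) with (c * x) in H by ring. lra. }
  assert (Hn : c * x + d <> 0) by (intro E; rewrite E, Rabs_R0 in Hge; pose proof (Rabs_pos c); lra).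
  split; [exact Hn|].
  assert (Eb : b = (a * d - 1) / c) by (apply (Rmult_eq_reg_r c); [field_simplify; lra|auto]).
  replace ((a * x + b) / (c * x + d)) with (a / c + (- / c) * / (c * x + d))
    by (rewrite Eb; field; auto).
  eapply Rle_lt_trans; [apply Rabs_triang|].
  rewrite Rabs_mult, Rabs_Ropp, (Rabs_inv (c * x + d)).
  assert (P2 : / Rabs (c * x + d) <= 1).
  { rewrite <- Rinv_1. apply Rinv_le_contravar; [lra|]. pose proof (Rabs_pos c). lra. }
  pose proof (Rabs_pos (/ c)).
  assert (Rabs (/ c) * / Rabs (c * x + d) <= Rabs (/ c)) by nra.
  lra.
Qed.

Lemma continuity_pt_eps F p eps : continuity_pt F p -> 0 < eps ->
  exists alp, 0 < alp /\ forall x, Rabs (x - p) < alp -> Rabs (F x - F p) < eps.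
Proof.
  intros Hc He. destruct (Hc eps He) as [alp [Halp H]]. exists alp. split; [exact Halp|].
  intros x Hx. destruct (Req_dec x p) as [->|Hne].
  - unfold Rminus. rewrite Rplus_opp_r, Rabs_R0. exact He.
  - apply (H x). split; [split; [exact Logic.I|auto]|exact Hx].
Qed.

Lemma sign_mul_le_abs s x : (s = 1 \/ s = -1) -> s * x <= Rabs x.
Proof.
  intros [-> | ->]; [rewrite Rmult_1_l; apply Rle_abs|].
  replace (-1 * x) with (- x) by ring. rewrite <- Rabs_Ropp. apply Rle_abs.
Qed.

Lemma germ_at_fixed_point (F : R -> R) p s a b c d del :
  continuity_pt F p -> F p = p -> (s = 1 \/ s = -1) -> 0 < del -> a * d - b * c = 1 ->
  (forall x, 0 < s * (x - p) < del -> c * x + d <> 0 /\ F x = (a * x + b) / (c * x + d)) ->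
  a * p + b = p * (c * p + d) /\
  affine_germ F (fun t => p + / t) s ((c * p + d) * (c * p + d)) (c * (c * p + d)).
Proof.
  intros Hc Fp Hs Hd Hdet Hloc.
  assert (ss : s * s = 1) by (destruct Hs as [-> | ->]; ring).
  assert (Hfix : a * p + b = p * (c * p + d)).
  { enough (a * p + b - p * (c * p + d) = 0) by lra.
    apply (eq0_of_small_solutions (a - p * c) _ c (c * p + d)). intros eta rho He Hr.
    destruct (continuity_pt_eps F p eta Hc He) as [alp [Halp Hcont]]. rewrite Fp in Hcont.
    set (m := Rmin alp (Rmin del rho) / 2).
    pose proof (Rmin_l alp (Rmin del rho)). pose proof (Rmin_r alp (Rmin del rho)).
    pose proof (Rmin_l del rho). pose proof (Rmin_r del rho).
    assert (0 < Rmin alp (Rmin del rho)) by (repeat apply Rmin_glb_lt; lra).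
    assert (Hx : s * ((p + s * m) - p) = m) by (replace (s * (p + s * m - p)) with (s * s * m) by ring;
                                                 rewrite ss; ring).
    assert (Ax : Rabs ((p + s * m) - p) = m).
    { destruct Hs as [-> | ->]; [rewrite Rabs_pos_eq|rewrite Rabs_left]; unfold m in *; lra. }
    destruct (Hloc (p + s * m)) as [Hn Hfx]; [unfold m in *; lra|].
    exists ((p + s * m) - p), (F (p + s * m) - p). split; [|split].
    - unfold m in *. lra.
    - apply Hcont. unfold m in *. lra.
    - rewrite Hfx. field. exact Hn. }
  split; [exact Hfix|].
  exists (/ del). intros t Ht.
  assert (T0 : 0 < / del) by (apply Rinv_0_lt_compat, Hd).
  assert (Hst : s * / t = / (s * t)) by (destruct Hs as [-> | ->]; field; lra).
  assert (Hw : 0 < s * / t < del).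
  { rewrite Hst. split; [apply Rinv_0_lt_compat; lra|].
    rewrite <- (Rinv_inv del). apply Rinv_lt_contravar; [apply Rmult_lt_0_compat|]; lra. }
  destruct (Hloc (p + / t)) as [Hn Hfx]; [replace (s * (p + / t - p)) with (s * / t) by ring; exact Hw|].
  rewrite Hfx. apply mobius_at_fixed_point; auto.
  intros ->. rewrite Rmult_0_r in Ht. lra.
Qed.

Lemma germ_at_infinity (F : R -> R) s a b c d del : (s = 1 \/ s = -1) ->
  (forall K T, exists x, T < s * x /\ K <= s * F x) -> 0 < del -> a * d - b * c = 1 ->
  (forall x, / del < s * x -> c * x + d <> 0 /\ F x = (a * x + b) / (c * x + d)) ->
  0 < a * a /\ affine_germ F (fun t => t) s (a * a) (a * b).
Proof.
  intros Hs Hunb Hd Hdet Hloc.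
  assert (Hc : c = 0).
  { apply NNPP. intro Hc. assert (Pc : 0 < Rabs c) by (apply Rabs_pos_lt; auto).
    set (T := Rmax (/ del) ((1 + Rabs d) / Rabs c + 1)).
    destruct (Hunb (Rabs (a / c) + Rabs (/ c) + 1) T) as [x [Hx HK]].
    pose proof (Rmax_l (/ del) ((1 + Rabs d) / Rabs c + 1)).
    pose proof (Rmax_r (/ del) ((1 + Rabs d) / Rabs c + 1)).
    pose proof (sign_mul_le_abs s x Hs). pose proof (sign_mul_le_abs s (F x) Hs).
    destruct (Hloc x) as [_ Hfx]; [unfold T in *; lra|].
    destruct (mobius_bounded_near_infinity a b c d x Hdet Hc) as [_ Hb]; [unfold T in *; lra|].
    rewrite <- Hfx in Hb. lra. }
  subst c. assert (Ha : a <> 0) by (intro E; subst a; lra).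
  split; [apply Rsqr_pos_lt, Ha|].
  exists (/ del). intros t Ht. destruct (Hloc t Ht) as [Hn Hfx].
  rewrite Hfx. replace d with (/ a) by (apply (Rmult_eq_reg_l a); [field_simplify|]; lra).
  field. exact Ha.
Qed.

(** * Piecewise Moebius homeomorphisms fixing [infty] *)

Definition window_family (Wf : R -> R -> Prop) : Prop :=
  (forall d d' x, 0 < d' <= d -> Wf d' x -> Wf d x) /\
  (forall d, 0 < d -> exists x, Wf d x) /\
  (forall e, exists d, 0 < d /\ ((forall x, Wf d x -> x < e) \/ (forall x, Wf d x -> e < x))).

Lemma side_window_family p s : (s = 1 \/ s = -1) ->
  window_family (fun d x => 0 < s * (x - p) < d).
Proof.
  intros Hs. split; [|split].
  - intros d d' x H1 H2. lra.
  - intros d Hd. exists (p + s * (d / 2)). destruct Hs as [-> | ->]; lra.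
  - intro e. destruct Hs as [-> | ->].
    + destruct (Rle_or_lt e p).
      * exists 1. split; [lra|]. right. intros; lra.
      * exists (e - p). split; [lra|]. left. intros; lra.
    + destruct (Rle_or_lt p e).
      * exists 1. split; [lra|]. left. intros; lra.
      * exists (p - e). split; [lra|]. right. intros; lra.
Qed.

Lemma end_window_family s : (s = 1 \/ s = -1) -> window_family (fun d x => / d < s * x).
Proof.
  intros Hs. split; [|split].
  - intros d d' x H1 H2. assert (/ d <= / d') by (apply Rinv_le_contravar; lra). lra.
  - intros d Hd. exists (s * (/ d + 1)). destruct Hs as [-> | ->]; lra.
  - intro e. exists (/ (Rabs e + 1)). pose proof (Rabs_pos e).
    split; [apply Rinv_0_lt_compat; lra|]. rewrite Rinv_inv.
    pose proof (Rle_abs e). pose proof (Rle_abs (- e)). rewrite Rabs_Ropp in *.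
    destruct Hs as [-> | ->]; [right|left]; intros; lra.
Qed.

Lemma in_arc_window_const (pc : piece) (Wx : R -> Prop) :
  (forall e, (pa pc = Some e \/ pb pc = Some e) ->
     (forall x, Wx x -> x < e) \/ (forall x, Wx x -> e < x)) ->
  forall x x', Wx x -> Wx x' -> (in_arc pc (Some x) <-> in_arc pc (Some x')).
Proof.
  intros H x x' Hx Hx'.
  assert (Side : forall o : P1, (forall e, o = Some e -> (forall x, Wx x -> x < e) \/ (forall x, Wx x -> e < x)) ->
            (ltP1 o (Some x) <-> ltP1 o (Some x')) /\ (ltP1 (Some x) o <-> ltP1 (Some x') o) /\
            Some x <> o /\ Some x' <> o).
  { intros [e|] Ho; simpl.
    - destruct (Ho e eq_refl) as [A|A]; pose proof (A x Hx); pose proof (A x' Hx');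
        repeat split; intros; try lra; intro Heq; inversion Heq; lra.
    - repeat split; intros; auto; discriminate. }
  destruct (Side (pa pc)) as [A1 [A2 [A3 A4]]]; [intros e E; apply H; auto|].
  destruct (Side (pb pc)) as [B1 [B2 [B3 B4]]]; [intros e E; apply H; auto|].
  destruct pc as [a b ca cb m]; unfold in_arc, open_arc, cyc in *; simpl in *. tauto.
Qed.

Lemma window_inside_or_outside Wf pc : window_family Wf ->
  exists d, 0 < d /\ ((forall x, Wf d x -> in_arc pc (Some x)) \/
                      (forall x, Wf d x -> ~ in_arc pc (Some x))).
Proof.
  intros [Hmono [Hne Hsep]].
  assert (Hend : forall o : P1, exists d, 0 < d /\ forall e, o = Some e ->
               (forall x, Wf d x -> x < e) \/ (forall x, Wf d x -> e < x)).
  { intros [e|]; [|exists 1; split; [lra|discriminate]].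
    destruct (Hsep e) as [d [Hd H]]. exists d. split; auto. intros e' E. inversion E; subst; auto. }
  destruct (Hend (pa pc)) as [d1 [Hd1 H1]], (Hend (pb pc)) as [d2 [Hd2 H2]].
  set (d := Rmin d1 d2). assert (Hd : 0 < d) by (apply Rmin_glb_lt; auto).
  assert (Shrink : forall d' x, 0 < d' -> d <= d' -> Wf d x -> Wf d' x) by (intros; eapply Hmono; eauto).
  assert (Hw : forall e, (pa pc = Some e \/ pb pc = Some e) ->
             (forall x, Wf d x -> x < e) \/ (forall x, Wf d x -> e < x)).
  { intros e [E|E]; [destruct (H1 e E) as [A|A]|destruct (H2 e E) as [A|A]]; [left|right|left|right];
      intros x Hx; apply A; apply (Shrink _ x); auto; unfold d; auto using Rmin_l, Rmin_r. }
  destruct (Hne d Hd) as [x0 Hx0].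
  exists d. split; auto.
  destruct (classic (in_arc pc (Some x0))) as [I0|I0]; [left|right]; intros x Hx;
    rewrite (in_arc_window_const pc (Wf d) Hw x x0 Hx Hx0); auto.
Qed.

Lemma window_inside_some_piece (ps : list piece) Wf :
  (forall x, exists p, In p ps /\ in_arc p x) -> window_family Wf ->
  exists pc d, In pc ps /\ 0 < d /\ forall x, Wf d x -> in_arc pc (Some x).
Proof.
  intros Hcov HW. pose proof HW as [Hmono [Hne _]].
  assert (Gen : forall l, (exists pc d, In pc l /\ 0 < d /\ forall x, Wf d x -> in_arc pc (Some x)) \/
     (exists d, 0 < d /\ forall pc, In pc l -> forall x, Wf d x -> ~ in_arc pc (Some x))).
  { induction l as [|pc l IH]; [right; exists 1; split; [lra|intros pc []]|].
    destruct (window_inside_or_outside Wf pc HW) as [d [Hd [A|A]]];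
      [left; exists pc, d; simpl; auto|].
    destruct IH as [[pc' [d' [I1 [I2 I3]]]]|[d' [Hd' B]]]; [left; exists pc', d'; simpl; auto|].
    right. exists (Rmin d d'). pose proof (Rmin_l d d'). pose proof (Rmin_r d d').
    assert (0 < Rmin d d') by (apply Rmin_glb_lt; auto).
    split; auto. intros pc0 [<-|I0] x Hx; [apply A|apply (B pc0 I0)]; eapply Hmono; eauto; lra. }
  destruct (Gen ps) as [H|[d [Hd B]]]; [exact H|].
  exfalso. destruct (Hne d Hd) as [x Hx]. destruct (Hcov (Some x)) as [pc [I1 I2]].
  exact (B pc I1 x Hx I2).
Qed.

(* Coordinate of a finite point of [P1]; the value at [infty] is junk. *)
Definition coord (o : P1) : R := match o with Some z => z | None => 0 end.

Definition coord_map (h : P1 -> P1) (t : R) : R := coord (h (Some t)).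

Definition pieces_fixed_points (ps : list piece) : list R :=
  flat_map (fun pc => mobius_fixed_points (pm pc)) ps.

Section PiecewiseMobius.
Variables (f g : P1 -> P1) (ps : list piece).
Hypotheses (gf : forall p, g (f p) = p) (fg : forall p, f (g p) = p).
Hypothesis f_cont : continuous_P1 f.
Hypothesis f_infty : f infty = infty.
Hypothesis pieces_mob : forall pc, In pc ps ->
  in_SL2 allR (pm pc) /\ forall x, in_arc pc x -> f x = mob (pm pc) x.
Hypothesis pieces_cover : forall x, exists pc, In pc ps /\ in_arc pc x.

Lemma f_Some t : f (Some t) = Some (coord_map f t).
Proof.
  unfold coord_map. destruct (f (Some t)) eqn:E; auto. exfalso.
  pose proof (gf (Some t)) as H1. pose proof (gf infty) as H2.
  rewrite E in H1. rewrite f_infty in H2. unfold infty in H2. congruence.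
Qed.

Lemma g_infty : g infty = infty.
Proof.
  destruct (g infty) eqn:E; auto.
  pose proof (fg infty) as H. rewrite E, f_Some in H. discriminate.
Qed.

Lemma g_Some t : g (Some t) = Some (coord_map g t).
Proof.
  unfold coord_map. destruct (g (Some t)) eqn:E; auto. exfalso.
  pose proof (fg (Some t)) as H. rewrite E in H. unfold infty in f_infty. congruence.
Qed.

Lemma f_g_coord t : coord_map f (coord_map g t) = t.
Proof. pose proof (fg (Some t)) as H. rewrite g_Some, f_Some in H. congruence. Qed.

Lemma g_f_coord t : coord_map g (coord_map f t) = t.
Proof. pose proof (gf (Some t)) as H. rewrite f_Some, g_Some in H. congruence. Qed.

Lemma f_coord_continuity : continuity (coord_map f).
Proof.
  intros x eps Heps.
  set (V := fun q : P1 => match q with Some z => Rabs (z - coord_map f x) < eps | None => False end).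
  destruct (f_cont (Some x) V) as [e [He He2]]; [rewrite f_Some; exists eps; split; auto|].
  exists e. split; auto. intros y [_ Hy]. specialize (He2 y Hy). rewrite f_Some in He2. exact He2.
Qed.

Lemma f_coord_mobius_on_window Wf : window_family Wf ->
  exists pc del a b c d, In pc ps /\ pm pc = (a, b, c, d) /\ 0 < del /\ a * d - b * c = 1 /\
    forall x, Wf del x -> c * x + d <> 0 /\ coord_map f x = (a * x + b) / (c * x + d).
Proof.
  intro HW. destruct (window_inside_some_piece ps Wf pieces_cover HW) as [pc [del [Hin [Hd Harc]]]].
  destruct (pieces_mob pc Hin) as [HS Hm].
  destruct (pm pc) as [[[a b] c] d] eqn:Em. simpl in HS.
  exists pc, del, a, b, c, d. do 3 (split; [auto|]). split; [tauto|].
  intros x Hx. specialize (Hm (Some x) (Harc x Hx)). rewrite f_Some in Hm. simpl in Hm.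
  destruct (Req_EM_T (c * x + d) 0); [discriminate|]. inversion Hm. auto.
Qed.

Lemma f_coord_increasing : strict_increasing (coord_map f).
Proof.
  destruct (f_coord_mobius_on_window _ (side_window_family 0 1 (or_introl eq_refl)))
    as [pc [del [a [b [c [d [_ [_ [Hd [Hdet Hloc]]]]]]]]]].
  assert (Hloc' : forall x, 0 < x < del -> c * x + d <> 0 /\ coord_map f x = (a * x + b) / (c * x + d))
    by (intros x Hx; apply Hloc; lra).
  apply (continuous_injective_increasing (coord_map f) (del / 3) (2 * del / 3) f_coord_continuity); [|lra|].
  - intros u v E. rewrite <- (g_f_coord u), <- (g_f_coord v), E. reflexivity.
  - rewrite (proj2 (Hloc' (del / 3) ltac:(lra))), (proj2 (Hloc' (2 * del / 3) ltac:(lra))).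
    apply mobius_increasing_on; [exact Hdet|lra|]. intros z Hz. apply Hloc'. lra.
Qed.

Lemma f_coord_germ_at_ends s : (s = 1 \/ s = -1) ->
  exists lam mu, 0 < lam /\ affine_germ (coord_map f) (fun t => t) s lam mu.
Proof.
  intro Hs.
  destruct (f_coord_mobius_on_window _ (end_window_family s Hs))
    as [pc [del [a [b [c [d [_ [_ [Hd [Hdet Hloc]]]]]]]]]].
  exists (a * a), (a * b).
  apply (germ_at_infinity (coord_map f) s a b c d del Hs); auto.
  apply (strict_increasing_unbounded (coord_map f) (coord_map g) s f_g_coord f_coord_increasing Hs).
Qed.

Lemma f_coord_germ_at_fixed s p : (s = 1 \/ s = -1) -> coord_map f p = p ->
  exists lam mu, 0 < lam /\ affine_germ (coord_map f) (fun t => p + / t) s lam mu /\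
    (s = 1 -> (lam = 1 /\ mu = 0) \/ In p (pieces_fixed_points ps)).
Proof.
  intros Hs Fp.
  destruct (f_coord_mobius_on_window _ (side_window_family p s Hs))
    as [pc [del [a [b [c [d [Hin [Em [Hd [Hdet Hloc]]]]]]]]]].
  destruct (germ_at_fixed_point (coord_map f) p s a b c d del (f_coord_continuity p) Fp Hs Hd Hdet Hloc)
    as [Hfix G].
  pose proof (mobius_fixed_point_denominator a b c d p Hdet Hfix).
  exists ((c * p + d) * (c * p + d)), (c * (c * p + d)).
  split; [apply Rsqr_pos_lt; auto|split; [exact G|intros _]].
  destruct (classic (c = 0 /\ d = a)) as [[-> ->]|N].
  - left. split; [lra|ring].
  - right. apply in_flat_map. exists pc. rewrite Em. split; auto.
    apply In_mobius_fixed_points; auto.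
Qed.

End PiecewiseMobius.

(** * The group [H] *)

Lemma in_H_pieces f : in_H f -> continuous_P1 f /\ f infty = infty /\ exists ps,
  (forall pc, In pc ps -> in_SL2 allR (pm pc) /\ forall z, in_arc pc z -> f z = mob (pm pc) z) /\
  (forall z, exists pc, In pc ps /\ in_arc pc z).
Proof.
  intros [[[_ [_ [_ [Cf _]]]] [ps [M Cov]]] Inf]. do 2 (split; [assumption|]).
  exists ps. split; [|exact Cov]. intros pc Hpc. destruct (M pc Hpc) as [S [_ [_ Mob]]]. auto.
Qed.

Lemma eval_word_coord (J : Type) (i j : J) (x y : J -> P1 -> P1) :
  (forall k, is_gen J i j k -> x k infty = infty /\ y k infty = infty /\
     forall t, x k (Some t) = Some (coord_map (x k) t) /\ y k (Some t) = Some (coord_map (y k) t)) ->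
  forall w, Forall (gen_letter J i j) w ->
    eval_word x y w infty = infty /\
    forall t, eval_word x y w (Some t) =
      Some (act_word J (fun k => coord_map (x k)) (fun k => coord_map (y k)) w t).
Proof.
  intros Hfin. induction w as [|[k b] w IH]; intro H; [split; reflexivity|].
  inversion H as [|? ? Hk Hw]; subst. destruct (IH Hw) as [A B].
  destruct (Hfin k Hk) as [Xi [Yi XY]]. split.
  - simpl. rewrite A. destruct b; assumption.
  - intro t. simpl. rewrite B. unfold act_letter. destruct b; apply XY.
Qed.

Lemma H_no_free_subgroup : ~ has_nonabelian_free_subgroup in_H.
Proof.
  intros [J [x [y [HS [Hinv [[i [j hij]] Hfree]]]]]].
  assert (gf : forall k p, y k (x k p) = p) by apply Hinv.
  assert (fg : forall k p, x k (y k p) = p) by apply Hinv.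
  destruct (in_H_pieces _ (HS i)) as [Ci [Ii [psi [Mi Covi]]]].
  destruct (in_H_pieces _ (HS j)) as [Cj [Ij [psj [Mj Covj]]]].
  set (Exc := pieces_fixed_points psi ++ pieces_fixed_points psj).
  assert (Pk : forall k, is_gen J i j k -> exists ps,
    continuous_P1 (x k) /\ x k infty = infty /\
    (forall pc, In pc ps -> in_SL2 allR (pm pc) /\ forall z, in_arc pc z -> x k z = mob (pm pc) z) /\
    (forall z, exists pc, In pc ps /\ in_arc pc z) /\ incl (pieces_fixed_points ps) Exc).
  { intros k [-> | ->]; [exists psi|exists psj]; do 4 (split; [assumption|]);
      intros e He; apply in_or_app; auto. }
  apply (free_increasing_pair_absurd J i j (fun k => coord_map (x k)) (fun k => coord_map (y k))
           Exc hij).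
  - intros k t Hk. destruct (Pk k Hk) as [ps [C [I [M [Cov _]]]]]. apply (f_g_coord (x k) (y k)); auto.
  - intros k t Hk. destruct (Pk k Hk) as [ps [C [I [M [Cov _]]]]]. apply (g_f_coord (x k) (y k)); auto.
  - intros k Hk. destruct (Pk k Hk) as [ps [C [I [M [Cov _]]]]].
    apply (f_coord_increasing (x k) (y k) ps); auto.
  - intros w Hw Hr Hl. destruct (Hfree w Hw Hr) as [p Hp].
    destruct (eval_word_coord J i j x y) with w as [A B]; [|exact Hl|].
    + intros k Hk. destruct (Pk k Hk) as [ps [C [I [M [Cov _]]]]].
      repeat split; [exact I|apply (g_infty (x k) (y k))|apply (f_Some (x k) (y k))|
                     apply (g_Some (x k) (y k))]; auto.
    + destruct p as [t|]; [|contradiction].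
      exists t. intro E. apply Hp. rewrite B, E. reflexivity.
  - intros k s Hk Hs. destruct (Pk k Hk) as [ps [C [I [M [Cov _]]]]].
    apply (f_coord_germ_at_ends (x k) (y k) ps); auto.
  - intros k s p Hk Hs Fp. destruct (Pk k Hk) as [ps [C [I [M [Cov Inc]]]]].
    destruct (f_coord_germ_at_fixed (x k) (y k) ps) with s p as [l [m [H1 [H2 H3]]]]; auto.
    exists l, m. do 2 (split; [assumption|]). intro E. destruct (H3 E); auto.
Qed.

Lemma in_HA_in_H A f : in_HA A f -> in_H f.
Proof.
  intros [[Hh [ps [H1 H2]]] Hinf]. split; [split; [exact Hh|]|exact Hinf].
  exists ps. split; [|exact H2]. intros p Hp. destruct (H1 p Hp) as [S [_ [_ M]]].
  split; [|exact (conj Logic.I (conj Logic.I M))].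
  destruct (pm p) as [[[a b] c] d]. unfold in_SL2, allR in *. tauto.
Qed.

Lemma has_nonabelian_free_subgroup_mono (S1 S2 : (P1 -> P1) -> Prop) :
  (forall f, S1 f -> S2 f) -> has_nonabelian_free_subgroup S1 -> has_nonabelian_free_subgroup S2.
Proof. intros H [J [x [y [A B]]]]. exists J, x, y. split; auto. Qed.

Theorem theorem2 :
  ~ has_nonabelian_free_subgroup in_H /\
  (forall A : R -> Prop, subring A -> ~ has_nonabelian_free_subgroup (in_HA A)).
Proof.
  split; [exact H_no_free_subgroup|].
  intros A _ HA. apply H_no_free_subgroup.
  exact (has_nonabelian_free_subgroup_mono _ _ (in_HA_in_H A) HA).
Qed.
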